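(* Let ${\bf R}=(R_1,\dots,R_d)\in\mathbb R_+^d$, $u=\max\{R_1,\dots,R_d\}$, $v=\min\{R_1,\dots,R_d\}$, $p=\max\{\frac12,u\}$, $g({\bf R})=\frac{1}{1/R_1+\cdots+1/R_d}$, and $$E=4^{p/v}\,2^{u/v}\,(1+1/(2v))^{u/(2v^2)}\,(2ep)^{1/(2v)}.$$ Then for all integers $n>E^d$, $$2^{v-p}\sqrt{\frac{1}{e(d+2u)}}\le n^{g({\bf R})}\,a_n(I_d:W_2^{\bf R}(\mathbb T^d)\to L_2(\mathbb T^d))\le 2^{p+u}\Big(1+\frac{2v+1}{2v}\Big)^{\frac{u}{2v}}\sqrt{\frac{2eu}{d}}.$$
   Context: $\mathbb T^d$ carries the normalized Lebesgue measure, $\hat f({\bf k})$ are Fourier coefficients. $W_2^{\bf R}(\mathbb T^d)$ is the Hilbert space of $f\in L_2(\mathbb T^d)$ with norm $\big(\sum_{{\bf k}\in\mathbb Z^d}(1+\sum_{j=1}^d|k_j|^{2R_j})|\hat f({\bf k})|^2\big)^{1/2}$; $I_d$ is the identity embedding; $a_n(T)=\inf\{\|T-A\|:\operatorname{rank}A<n\}$ are the approximation numbers. *)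

From Stdlib Require Import Reals Lra List ZArith.
Open Scope R_scope.

Definition Zd (d : nat) := { k : list Z | length k = d }.

Definition C := (R * R)%type.
Definition C0 : C := (0, 0).
Definition Cadd (a b : C) : C := (fst a + fst b, snd a + snd b).
Definition Csub (a b : C) : C := (fst a - fst b, snd a - snd b).
Definition Cmul (a b : C) : C :=
  (fst a * fst b - snd a * snd b, fst a * snd b + snd a * fst b).
Definition Cnorm2 (a : C) : R := fst a ^ 2 + snd a ^ 2.

(* Fourier coefficient sequences on Z^d. *)
Definition seqC (d : nat) := Zd d -> C.

Definition psum {d} (w : Zd d -> R) (x : seqC d) (l : list (Zd d)) : R :=
  fold_right (fun k acc => w k * Cnorm2 (x k) + acc) 0 l.

Definition in_wl2 {d} (w : Zd d -> R) (x : seqC d) : Prop :=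
  exists M, forall l, NoDup l -> psum w x l <= M.

Definition wnorm_le {d} (w : Zd d -> R) (x : seqC d) (r : R) : Prop :=
  0 <= r /\ forall l, NoDup l -> psum w x l <= r ^ 2.

(* t^s for t >= 0, s > 0, with 0^s = 0 *)
Definition pw (t s : R) : R :=
  if Req_EM_T t 0 then 0 else Rpower t s.

Definition sob_weight (d : nat) (Rv : nat -> R) (k : Zd d) : R :=
  1 + fold_right
        (fun j acc => pw (Rabs (IZR (nth j (proj1_sig k) 0%Z))) (2 * Rv j) + acc)
        0 (seq 0 d).

(* L2(T^d) (normalized measure) via Parseval: unit weight *)
Definition one_weight (d : nat) (k : Zd d) : R := 1.

Definition in_W d Rv (x : seqC d) := in_wl2 (sob_weight d Rv) x.
Definition in_L2 d (x : seqC d) := in_wl2 (one_weight d) x.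

Definition lincomb {d} (cs : list C) (ys : list (seqC d)) (k : Zd d) : C :=
  fold_right Cadd C0 (map (fun p => Cmul (fst p) (snd p k)) (combine cs ys)).

Definition admissible (d : nat) (Rv : nat -> R) (n : nat)
  (A : seqC d -> seqC d) : Prop :=
  (forall x, in_W d Rv x -> in_L2 d (A x)) /\
  (forall x y a b, in_W d Rv x -> in_W d Rv y ->
     forall k, A (fun i => Cadd (Cmul a (x i)) (Cmul b (y i))) k
             = Cadd (Cmul a (A x k)) (Cmul b (A y k))) /\
  (exists ys : list (seqC d), (length ys < n)%nat /\
     forall x, in_W d Rv x -> exists cs : list C,
        length cs = length ys /\ forall k, A x k = lincomb cs ys k).

Definition err_le d Rv (A : seqC d -> seqC d) (M : R) : Prop :=
  0 <= M /\
  forall x, in_W d Rv x -> wnorm_le (sob_weight d Rv) x 1 ->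
    wnorm_le (one_weight d) (fun k => Csub (x k) (A x k)) M.

Definition approx_set d Rv n (M : R) : Prop :=
  exists A, admissible d Rv n A /\ err_le d Rv A M.

Definition is_inf (S : R -> Prop) (a : R) : Prop :=
  (forall M, S M -> a <= M) /\ (forall b, (forall M, S M -> b <= M) -> b <= a).

Definition is_approx_number d Rv n (a : R) : Prop :=
  is_inf (approx_set d Rv n) a.

Definition Rmaxd (d : nat) (Rv : nat -> R) : R :=
  fold_right (fun j acc => Rmax (Rv j) acc) (Rv 0%nat) (seq 0 d).
Definition Rmind (d : nat) (Rv : nat -> R) : R :=
  fold_right (fun j acc => Rmin (Rv j) acc) (Rv 0%nat) (seq 0 d).
Definition gR (d : nat) (Rv : nat -> R) : R :=
  / fold_right (fun j acc => / Rv j + acc) 0 (seq 0 d).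

Definition Econst (d : nat) (Rv : nat -> R) : R :=
  let u := Rmaxd d Rv in let v := Rmind d Rv in let p := Rmax (1/2) u in
  Rpower 4 (p / v) * Rpower 2 (u / v)
  * Rpower (1 + 1 / (2 * v)) (u / (2 * v ^ 2))
  * Rpower (2 * exp 1 * p) (1 / (2 * v)).

From Pilot Require Import Defs.
From Stdlib Require Import Reals List ZArith.
From Stdlib Require Import Lra Lia Permutation Classical FunctionalExtensionality Eqdep_dec.
From Coquelicot Require Import Complex.
Open Scope R_scope.

(** Lower bound: with [Y = n^(2 g(R))], the integer box [|k_j| <= Y^(1/(2 R_j))] contains at least
    [n] frequencies, all of Sobolev weight at most [1 + d Y]. An operator of rank [< n] annihilates a
    nonzero combination of the corresponding unit sequences, and for such a combination the [L_2] norm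
    is at least [(1 + d Y)^(-1/2)] times the Sobolev norm.

    Upper bound: projecting onto the frequencies of weight [< T] has error [T^(-1/2)]. By Rankin's
    trick their number is at most [exp (lam (T - 1)) prod_j sum_m exp (- lam |m|^(2 R_j))], and each
    one-dimensional sum is bounded by comparison with a geometric series ([R_j >= 1/2]) or with
    [sum 1/m^2] ([R_j < 1/2]). For [T = (n^g / bound)^2] and [lam T = d/(2u)] the count is [< n]
    as soon as [n > E^d]. *)

Definition rsum {A} (f : A -> R) (l : list A) : R := fold_right (fun x acc => f x + acc) 0 l.
Definition rprod {A} (f : A -> R) (l : list A) : R := fold_right (fun x acc => f x * acc) 1 l.

Lemma rsum_app {A} (f : A -> R) l1 l2 : rsum f (l1 ++ l2) = rsum f l1 + rsum f l2.
Proof. induction l1; simpl. ring. unfold rsum in *; simpl; rewrite IHl1; ring. Qed.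

Lemma rsum_scal {A} (f : A -> R) l c : rsum (fun x => c * f x) l = c * rsum f l.
Proof. induction l; unfold rsum in *; simpl. ring. rewrite IHl; ring. Qed.

Lemma rsum_ext_in {A} (f g : A -> R) l : (forall x, In x l -> f x = g x) -> rsum f l = rsum g l.
Proof. induction l; unfold rsum in *; simpl; intros H; auto. rewrite H, IHl; auto. Qed.

Lemma rsum_le {A} (f g : A -> R) l : (forall x, In x l -> f x <= g x) -> rsum f l <= rsum g l.
Proof.
  induction l; unfold rsum in *; simpl; intros H. lra.
  pose proof (H a (or_introl eq_refl)). pose proof (IHl (fun x Hx => H x (or_intror Hx))). lra.
Qed.

Lemma rsum_nonneg {A} (f : A -> R) l : (forall x, In x l -> 0 <= f x) -> 0 <= rsum f l.
Proof.
  induction l; unfold rsum in *; simpl; intros H. lra.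
  pose proof (H a (or_introl eq_refl)). pose proof (IHl (fun x Hx => H x (or_intror Hx))). lra.
Qed.

Lemma rsum_ge_term {A} (f : A -> R) l x : (forall y, In y l -> 0 <= f y) -> In x l -> f x <= rsum f l.
Proof.
  induction l as [|a l IH]; intros H Hx. contradiction.
  pose proof (rsum_nonneg f l (fun y Hy => H y (or_intror Hy))).
  change (f x <= f a + rsum f l). destruct Hx as [<-|Hx]. lra.
  pose proof (H a (or_introl eq_refl)). pose proof (IH (fun y Hy => H y (or_intror Hy)) Hx). lra.
Qed.

Lemma rsum_map {A B} (g : A -> B) (f : B -> R) l : rsum f (map g l) = rsum (fun x => f (g x)) l.
Proof. induction l; unfold rsum in *; simpl; auto. rewrite IHl; auto. Qed.

Lemma rprod_pos {A} (f : A -> R) l : (forall x, In x l -> 0 < f x) -> 0 < rprod f l.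
Proof. induction l; unfold rprod in *; simpl; intros H. lra. apply Rmult_lt_0_compat; auto. Qed.

Lemma rprod_le {A} (f g : A -> R) l : (forall x, In x l -> 0 <= f x <= g x) -> rprod f l <= rprod g l.
Proof.
  induction l as [|a l IH]; unfold rprod in *; simpl; intros H. lra.
  assert (0 <= fold_right (fun x acc => f x * acc) 1 l).
  { clear -H. induction l; simpl. lra.
    apply Rmult_le_pos. apply H; simpl; auto. apply IHl; intros; apply H; simpl in *; tauto. }
  destruct (H a (or_introl eq_refl)). apply Rmult_le_compat; auto.
Qed.

Lemma rprod_scal {A} (f : A -> R) c l : rprod (fun x => c * f x) l = c ^ length l * rprod f l.
Proof. induction l; unfold rprod in *; simpl. ring. rewrite IHl; ring. Qed.

Definition csum (l : list C) : C := fold_right Cplus (RtoC 0) l.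

Lemma csum_perm l l' : Permutation l l' -> csum l = csum l'.
Proof. induction 1; simpl; auto; try congruence. unfold csum; ring. Qed.

Lemma csum_add {A} (l : list A) (f g : A -> C) :
  csum (map (fun x => Cplus (f x) (g x)) l) = Cplus (csum (map f l)) (csum (map g l)).
Proof. induction l; simpl. unfold csum; simpl; ring. unfold csum in *; simpl. rewrite IHl. ring. Qed.

Lemma csum_scal {A} (l : list A) (f : A -> C) (k : C) :
  csum (map (fun x => Cmult k (f x)) l) = Cmult k (csum (map f l)).
Proof. induction l; simpl. ring. rewrite IHl. ring. Qed.

Lemma csum_zero {A} (l : list A) (f : A -> C) :
  (forall x, In x l -> f x = RtoC 0) -> csum (map f l) = RtoC 0.
Proof. induction l; simpl; intros H. auto. rewrite H, IHl by auto. ring. Qed.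

Lemma csum_fold {A} (f : A -> C) l :
  fold_right (fun x acc => Cadd (f x) acc) C0 l = csum (map f l).
Proof. induction l; simpl; auto. rewrite IHl. reflexivity. Qed.

Lemma csum_exchange {A} (L : list A) (J : list nat) (c : A -> C) (a : A -> nat -> C) (y : nat -> C) :
  csum (map (fun p => Cmult (c p) (csum (map (fun j => Cmult (a p j) (y j)) J))) L)
  = csum (map (fun j => Cmult (csum (map (fun p => Cmult (c p) (a p j)) L)) (y j)) J).
Proof.
  induction L as [|q L IH]; simpl.
  - symmetry. apply csum_zero. intros. unfold csum; simpl. ring.
  - unfold csum at 1; simpl. fold (csum (map (fun p => Cmult (c p) (csum (map (fun j => Cmult (a p j) (y j)) J))) L)).
    rewrite IH, <- csum_scal, <- csum_add. f_equal. apply map_ext. intros j.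
    unfold csum at 2; simpl. fold (csum (map (fun p => Cmult (c p) (a p j)) L)). ring.
Qed.

Lemma Rdiv_le_0_compat a b : 0 <= a -> 0 < b -> 0 <= a / b.
Proof. intros. unfold Rdiv. apply Rmult_le_pos; auto. left; apply Rinv_0_lt_compat; auto. Qed.

Lemma exp_le_exp x y : x <= y -> exp x <= exp y.
Proof. intros [H|<-]; [left; apply exp_increasing; auto|lra]. Qed.

Lemma exp_1_ge_2 : 2 <= exp 1.
Proof. pose proof (exp_ineq1_le 1). lra. Qed.

Lemma exp_ge_e_mul t : exp 1 * t <= exp t.
Proof.
  pose proof (exp_ineq1_le (t - 1)).
  replace t with (1 + (t - 1)) at 2 by ring. rewrite exp_plus. pose proof (exp_pos 1). nra.
Qed.

Lemma exp_mult_INR m x : exp (INR m * x) = exp x ^ m.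
Proof.
  induction m; [simpl; rewrite Rmult_0_l, exp_0; auto|].
  rewrite S_INR, Rmult_plus_distr_r, Rmult_1_l, exp_plus, IHm. simpl. ring.
Qed.

Lemma Rpower_pos x y : 0 < Rpower x y.
Proof. unfold Rpower. apply exp_pos. Qed.

Lemma Rpower_exp a q : Rpower (exp a) q = exp (q * a).
Proof. unfold Rpower. rewrite ln_exp. auto. Qed.

Lemma Rpower_2 x : 0 < x -> Rpower x 2 = x ^ 2.
Proof. intros. replace 2 with (INR 2) by (simpl; ring). apply Rpower_pow; auto. Qed.

Lemma Rpower_Rinv x q : 0 < x -> Rpower (/ x) q = / Rpower x q.
Proof. intros. unfold Rpower. rewrite ln_Rinv by auto. rewrite <- exp_Ropp. f_equal. ring. Qed.

Lemma Rpower_div a b x : 0 < a -> 0 < b -> Rpower (a / b) x = Rpower a x / Rpower b x.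
Proof.
  intros. unfold Rdiv. rewrite <- Rpower_mult_distr by (try apply Rinv_0_lt_compat; auto).
  rewrite Rpower_Rinv by auto. auto.
Qed.

Lemma Rpower_ge1 b c : 1 <= b -> 0 <= c -> 1 <= Rpower b c.
Proof. intros. rewrite <- (Rpower_O b) by lra. apply Rle_Rpower; auto. Qed.

Lemma Rpower_le1 b c : 0 < b <= 1 -> 0 <= c -> Rpower b c <= 1.
Proof.
  intros. apply Rle_trans with (Rpower 1 c); [apply Rle_Rpower_l; lra|].
  unfold Rpower. rewrite ln_1, Rmult_0_r, exp_0. lra.
Qed.

Lemma Rpower_ge_self x s : 1 <= x -> 1 <= s -> x <= Rpower x s.
Proof. intros. rewrite <- (Rpower_1 x) at 1 by lra. apply Rle_Rpower; auto. Qed.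

Lemma Rpower_le_self c x : 0 < c < 1 -> 1 <= x -> Rpower c x <= c.
Proof.
  intros Hc Hx. unfold Rpower. rewrite <- (exp_ln c) at 2 by lra.
  apply exp_le_exp. assert (ln c < 0) by (rewrite <- ln_1; apply ln_increasing; lra). nra.
Qed.

Definition nat_floor (y : R) : nat := Z.to_nat (up y - 1).

Lemma nat_floor_spec y : 0 < y -> INR (nat_floor y) <= y < INR (nat_floor y) + 1.
Proof.
  intros Hy. destruct (archimed y) as [H1 H2].
  assert (1 <= up y)%Z by (assert (0 < up y)%Z by (apply lt_IZR; lra); lia).
  unfold nat_floor. rewrite INR_IZR_INZ, Z2Nat.id, minus_IZR by lia. simpl. lra.
Qed.

(** * Linear dependence of long families *)

(** A linear combination of vectors [nat -> C] is encoded as a list of (coefficient, vector) pairs. *)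
Definition comb (P : list (C * (nat -> C))) (j : nat) : C :=
  csum (map (fun p => Cmult (fst p) (snd p j)) P).

Definition nontrivial {B} (P : list (C * B)) : Prop := exists p, In p P /\ fst p <> RtoC 0.

Definition recoef {A B} (g : A -> B) (P : list (C * A)) : list (C * B) :=
  map (fun p => (fst p, g (snd p))) P.

Lemma recoef_of_map_snd {A B} (X : list A) (g : A -> B) (P' : list (C * B)) :
  map snd P' = map g X -> exists P, map snd P = X /\ recoef g P = P'.
Proof.
  revert P'; induction X as [|x X IH]; intros [|[c b] P'] H; simpl in H; try discriminate.
  - exists nil; auto.
  - injection H; intros H1 H2. destruct (IH P' H1) as [P [E1 E2]].
    exists ((c, x) :: P). simpl. rewrite E1, H2. unfold recoef in *. rewrite E2. auto.
Qed.

Lemma nontrivial_recoef {A B} (g : A -> B) P : nontrivial (recoef g P) -> nontrivial P.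
Proof.
  intros [p [Hp Hp0]]. apply in_map_iff in Hp. destruct Hp as [q [<- Hq]]. exists q. auto.
Qed.

Lemma nontrivial_perm {B} (P Q : list (C * B)) : Permutation P Q -> nontrivial P -> nontrivial Q.
Proof. intros HPQ [p [Hp Hp0]]. exists p. split; auto. eapply Permutation_in; eauto. Qed.

Lemma comb_perm P Q j : Permutation P Q -> comb P j = comb Q j.
Proof. intros H. apply csum_perm, Permutation_map, H. Qed.

Definition shift (y : nat -> C) (j : nat) : C := y (S j).

(** Gaussian elimination of the coordinate [0] of [y] against the pivot [x]. *)
Definition eliminate (x y : nat -> C) (j : nat) : C :=
  Cminus (y (S j)) (Cmult (Cdiv (y 0%nat) (x 0%nat)) (x (S j))).

Lemma comb_recoef_shift P j : comb (recoef shift P) j = comb P (S j).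
Proof. unfold comb, recoef. rewrite map_map. reflexivity. Qed.

Lemma comb_recoef_eliminate x P j : x 0%nat <> RtoC 0 ->
  comb (recoef (eliminate x) P) j
  = Cminus (comb P (S j)) (Cmult (Cdiv (x (S j)) (x 0%nat)) (comb P 0%nat)).
Proof.
  intros Hx. unfold comb, recoef, eliminate. rewrite map_map, <- csum_scal.
  replace (Cminus _ _) with (Cplus (csum (map (fun p => Cmult (fst p) (snd p (S j))) P))
    (csum (map (fun p => Cmult (Copp (Cdiv (x (S j)) (x 0%nat))) (Cmult (fst p) (snd p 0%nat))) P)))
    by (rewrite csum_scal, csum_scal; ring).
  rewrite <- csum_add. f_equal. apply map_ext. intros p. simpl. field. auto.
Qed.

Lemma comb_add_pivot m x P : x 0%nat <> RtoC 0 ->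
  (forall j, (j < m)%nat -> comb (recoef (eliminate x) P) j = RtoC 0) ->
  forall j, (j < S m)%nat -> comb ((Copp (Cdiv (comb P 0%nat) (x 0%nat)), x) :: P) j = RtoC 0.
Proof.
  intros Hx HP [|j] Hj; unfold comb; simpl; fold (comb P 0%nat); [field; auto|].
  fold (comb P (S j)). specialize (HP j ltac:(lia)). rewrite comb_recoef_eliminate in HP by auto.
  replace (comb P (S j)) with (Cplus (Cminus (comb P (S j))
    (Cmult (Cdiv (x (S j)) (x 0%nat)) (comb P 0%nat))) (Cmult (Cdiv (x (S j)) (x 0%nat)) (comb P 0%nat)))
    by ring.
  rewrite HP. field. auto.
Qed.

Lemma exists_nontrivial_relation m (V : list (nat -> C)) : (m < length V)%nat ->
  exists P, map snd P = V /\ nontrivial P /\ forall j, (j < m)%nat -> comb P j = RtoC 0.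
Proof.
  revert V; induction m as [|m IHm]; intros V HV.
  - destruct V as [|v V']; simpl in HV; [lia|].
    exists ((RtoC 1, v) :: map (fun y => (RtoC 0, y)) V'). split; [|split].
    + simpl. rewrite map_map. simpl. rewrite map_id. auto.
    + exists (RtoC 1, v). split; [left; auto|]. simpl. intro H. injection H. lra.
    + intros; lia.
  - destruct (classic (exists x, In x V /\ x 0%nat <> RtoC 0)) as [[x [Hx Hx0]]|Hno].
    + destruct (in_split _ _ Hx) as [V1 [V2 ->]].
      assert (HX : (m < length (map (eliminate x) (V1 ++ V2)))%nat).
      { rewrite length_map, length_app. rewrite length_app in HV. simpl in HV. lia. }
      destruct (IHm _ HX) as [P' [E' [HP' H']]].
      destruct (recoef_of_map_snd _ _ _ E') as [P0 [E1 <-]].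
      set (P1 := (Copp (Cdiv (comb P0 0%nat) (x 0%nat)), x) :: P0).
      assert (Hperm : Permutation (V1 ++ x :: V2) (map snd P1)).
      { unfold P1. simpl. rewrite E1. apply Permutation_sym, Permutation_middle. }
      destruct (Permutation_map_inv _ _ Hperm) as [P [EP HPP]].
      exists P. split; [auto|split].
      * apply (nontrivial_perm P1); auto. apply nontrivial_recoef in HP'.
        destruct HP' as [p [Hp Hp0]]. exists p. split; auto. right; auto.
      * intros j Hj. rewrite <- (comb_perm _ _ _ HPP). apply (comb_add_pivot m); auto.
    + assert (HX : (m < length (map shift V))%nat) by (rewrite length_map; lia).
      destruct (IHm _ HX) as [P' [E' [HP' H']]].
      destruct (recoef_of_map_snd _ _ _ E') as [P [E1 <-]].
      exists P. split; [auto|split]; [apply nontrivial_recoef in HP'; auto|].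
      intros [|j] Hj.
      * apply csum_zero. intros p Hp.
        assert (In (snd p) V) by (rewrite <- E1; apply in_map; auto).
        destruct (Ceq_dec (snd p 0%nat) (RtoC 0)) as [e|e].
        -- rewrite e. ring.
        -- exfalso; apply Hno; eauto.
      * rewrite <- comb_recoef_shift. apply H'. lia.
Qed.

Lemma Cadd_Cplus : Cadd = Cplus. Proof. reflexivity. Qed.
Lemma Cmul_Cmult : Cmul = Cmult. Proof. reflexivity. Qed.
Lemma C0_RtoC : C0 = RtoC 0. Proof. reflexivity. Qed.
Lemma Csub_Cminus : Csub = Cminus. Proof. reflexivity. Qed.

(** The complex operations of [Defs] are Coquelicot's up to unfolding, so its [ring] applies. *)
Ltac cring :=
  first [ rewrite ?Cadd_Cplus, ?Cmul_Cmult, ?C0_RtoC, ?Csub_Cminus;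
          match goal with |- @eq _ ?a ?b => change (@eq Complex.C a b) end; ring
        | unfold Cadd, Cmul, Csub, C0, Cplus, Cmult, Cminus, Copp, RtoC;
          apply injective_projections; simpl; ring ].

Lemma Zd_val_inj {d} (a b : Zd d) : proj1_sig a = proj1_sig b -> a = b.
Proof.
  destruct a as [a Ha], b as [b Hb]; simpl; intros; subst. f_equal. apply UIP_dec, Nat.eq_dec.
Qed.

Definition Zd_eq_dec {d} (a b : Zd d) : {a = b} + {a <> b}.
Proof.
  destruct (list_eq_dec Z.eq_dec (proj1_sig a) (proj1_sig b)) as [e|e].
  - left; apply Zd_val_inj; auto.
  - right; intro; subst; auto.
Defined.

Definition unit_seq {d} (k0 : Zd d) : seqC d := fun k => if Zd_eq_dec k k0 then RtoC 1 else C0.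

Definition finseq {d} (P : list (C * Zd d)) : seqC d :=
  fun k => fold_right (fun p acc => Cadd (Cmul (fst p) (unit_seq (snd p) k)) acc) C0 P.

Definition scale_coef {B} (r : R) (P : list (C * B)) : list (C * B) :=
  map (fun p => (Cmult (RtoC r) (fst p), snd p)) P.

Definition coef_mass {d} (w : Zd d -> R) (P : list (C * Zd d)) : R :=
  rsum (fun p => w (snd p) * Cnorm2 (fst p)) P.

Lemma Cnorm2_nonneg a : 0 <= Cnorm2 a.
Proof. unfold Cnorm2. nra. Qed.

Lemma Cnorm2_C0 : Cnorm2 C0 = 0.
Proof. unfold Cnorm2, C0; simpl. ring. Qed.

Lemma Cnorm2_pos a : a <> RtoC 0 -> 0 < Cnorm2 a.
Proof.
  destruct a as [x y]. unfold Cnorm2; simpl. intros H.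
  destruct (Req_dec x 0); destruct (Req_dec y 0); subst; [exfalso; apply H; reflexivity| nra..].
Qed.

Lemma Cnorm2_scal r a : Cnorm2 (Cmult (RtoC r) a) = r ^ 2 * Cnorm2 a.
Proof. destruct a; unfold Cnorm2, Cmult, RtoC; simpl. ring. Qed.

Lemma psum_rsum {d} w (x : seqC d) l : psum w x l = rsum (fun k => w k * Cnorm2 (x k)) l.
Proof. reflexivity. Qed.

Lemma psum_ext {d} w (x y : seqC d) l : (forall k, x k = y k) -> psum w x l = psum w y l.
Proof. intros H; induction l; simpl; auto. rewrite H, IHl. auto. Qed.

Lemma psum_incl {d} w (x : seqC d) l K : (forall k, 0 <= w k) -> NoDup l -> incl l K ->
  psum w x l <= psum w x K.
Proof.
  intros Hw Hl; revert K; induction Hl as [|a l Ha Hl IH]; intros K HK.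
  - apply (rsum_nonneg (fun k => w k * Cnorm2 (x k))). intros k _.
    apply Rmult_le_pos; [apply Hw|apply Cnorm2_nonneg].
  - assert (HaK : In a K) by (apply HK; left; auto).
    destruct (in_split _ _ HaK) as [K1 [K2 ->]].
    rewrite !psum_rsum in *. rewrite rsum_app.
    assert (rsum (fun k => w k * Cnorm2 (x k)) l <= rsum (fun k => w k * Cnorm2 (x k)) (K1 ++ K2)).
    { apply IH. intros y Hy. assert (In y (K1 ++ a :: K2)) by (apply HK; right; auto).
      apply in_app_or in H. apply in_or_app. destruct H as [H|[H|H]]; auto. subst; contradiction. }
    rewrite rsum_app in H. simpl. lra.
Qed.

Lemma psum_filter {d} w (x : seqC d) l (P : Zd d -> bool) :
  (forall k, P k = false -> x k = C0) -> psum w x l = psum w x (filter P l).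
Proof.
  intros H; induction l; simpl; auto. destruct (P a) eqn:E; simpl; rewrite IHl; auto.
  rewrite H, Cnorm2_C0 by auto. ring.
Qed.

Lemma psum_le_of_support {d} w (x : seqC d) l K : (forall k, 0 <= w k) -> NoDup l ->
  (forall k, ~ In k K -> x k = C0) -> psum w x l <= psum w x K.
Proof.
  intros Hw Hl HK. set (inK k := if in_dec Zd_eq_dec k K then true else false).
  rewrite (psum_filter w x l inK).
  - apply psum_incl; auto. apply NoDup_filter; auto.
    intros y Hy. apply filter_In in Hy. destruct Hy as [_ Hy]. unfold inK in Hy.
    destruct in_dec; auto; discriminate.
  - intros k Hk. apply HK. unfold inK in Hk. destruct in_dec; auto; discriminate.
Qed.

Lemma in_wl2_of_support {d} w (x : seqC d) K : (forall k, 0 <= w k) ->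
  (forall k, ~ In k K -> x k = C0) -> in_wl2 w x.
Proof. intros Hw HK. exists (psum w x K). intros l Hl. apply psum_le_of_support; auto. Qed.

Lemma pw_nonneg t s : 0 <= pw t s.
Proof. unfold pw. destruct Req_EM_T. lra. unfold Rpower. left; apply exp_pos. Qed.

Lemma sob_weight_ge1 d Rv k : 1 <= sob_weight d Rv k.
Proof.
  unfold sob_weight.
  pose proof (rsum_nonneg (fun j => pw (Rabs (IZR (nth j (proj1_sig k) 0%Z))) (2 * Rv j)) (seq 0 d)
    (fun j _ => pw_nonneg _ _)).
  unfold rsum in H. lra.
Qed.

Lemma sob_weight_nonneg d Rv k : 0 <= sob_weight d Rv k.
Proof. pose proof (sob_weight_ge1 d Rv k); lra. Qed.

Lemma one_weight_nonneg d k : 0 <= one_weight d k.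
Proof. unfold one_weight; lra. Qed.

Lemma finseq_out {d} (P : list (C * Zd d)) k : ~ In k (map snd P) -> finseq P k = C0.
Proof.
  induction P as [|[c k0] P IH]; simpl; intros H; auto.
  unfold finseq in *; simpl. rewrite IH by tauto. unfold unit_seq. destruct Zd_eq_dec.
  - subst; tauto.
  - cring.
Qed.

Lemma finseq_at {d} (P : list (C * Zd d)) q : NoDup (map snd P) -> In q P -> finseq P (snd q) = fst q.
Proof.
  induction P as [|[c k0] P IH]; simpl; intros Hn Hq. contradiction.
  inversion Hn; subst. unfold finseq; simpl. fold (finseq P (snd q)).
  destruct Hq as [<-|Hq].
  - simpl. rewrite finseq_out by auto. unfold unit_seq. destruct Zd_eq_dec; [cring|tauto].
  - rewrite IH by auto. unfold unit_seq. destruct Zd_eq_dec as [e|].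
    + exfalso. apply H1. rewrite <- e. apply in_map; auto.
    + cring.
Qed.

Lemma psum_finseq {d} w (P : list (C * Zd d)) : NoDup (map snd P) ->
  psum w (finseq P) (map snd P) = coef_mass w P.
Proof.
  intros Hn. rewrite psum_rsum, rsum_map. apply rsum_ext_in. intros q Hq. rewrite finseq_at; auto.
Qed.

Lemma coef_mass_scale {d} w r (P : list (C * Zd d)) : coef_mass w (scale_coef r P) = r ^ 2 * coef_mass w P.
Proof.
  unfold coef_mass, scale_coef. rewrite rsum_map, <- rsum_scal. apply rsum_ext_in.
  intros p _. cbn [fst snd]. rewrite Cnorm2_scal. unfold Defs.C, Complex.C. ring.
Qed.

Lemma finseq_in_W {d} Rv (P : list (C * Zd d)) : in_W d Rv (finseq P).
Proof. apply (in_wl2_of_support _ _ (map snd P)). apply sob_weight_nonneg. apply finseq_out. Qed.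

Lemma unit_seq_in_W {d} Rv (k0 : Zd d) : in_W d Rv (unit_seq k0).
Proof.
  apply (in_wl2_of_support _ _ (k0 :: nil)). apply sob_weight_nonneg.
  intros k Hk. unfold unit_seq. destruct Zd_eq_dec; auto. subst; simpl in Hk; tauto.
Qed.

Lemma zero_in_W {d} Rv : in_W d Rv (fun _ : Zd d => C0).
Proof. apply (in_wl2_of_support _ _ nil). apply sob_weight_nonneg. auto. Qed.

Section LinearOnW.

Variables (d : nat) (Rv : nat -> R) (A : seqC d -> seqC d).
Hypothesis A_linear : forall x y a b, in_W d Rv x -> in_W d Rv y ->
  forall k, A (fun i => Cadd (Cmul a (x i)) (Cmul b (y i))) k = Cadd (Cmul a (A x k)) (Cmul b (A y k)).

Lemma A_zero k : A (fun _ => C0) k = C0.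
Proof.
  pose proof (A_linear _ _ C0 C0 (zero_in_W Rv) (zero_in_W Rv) k) as H. cbv beta in H.
  replace (fun i : Zd d => Cadd (Cmul C0 C0) (Cmul C0 C0)) with (fun _ : Zd d => C0) in H.
  - rewrite H. cring.
  - apply functional_extensionality; intros. cring.
Qed.

Lemma A_finseq P k :
  A (finseq P) k = csum (map (fun p => Cmult (fst p) (A (unit_seq (snd p)) k)) P).
Proof.
  induction P as [|[c k0] P IH]; simpl.
  - apply A_zero.
  - replace (finseq ((c, k0) :: P)) with (fun i => Cadd (Cmul c (unit_seq k0 i)) (Cmul (RtoC 1) (finseq P i))).
    + rewrite A_linear by (apply unit_seq_in_W || apply finseq_in_W). rewrite IH. cring.
    + apply functional_extensionality; intros i. unfold finseq; simpl. cring.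
Qed.

End LinearOnW.

Lemma lincomb_seq {d} (cs : list C) (ys : list (seqC d)) k : length cs = length ys ->
  lincomb cs ys k
  = csum (map (fun j => Cmult (nth j cs C0) (nth j ys (fun _ => C0) k)) (seq 0 (length ys))).
Proof.
  unfold lincomb. rewrite csum_fold.
  revert ys; induction cs as [|c cs IH]; intros [|y ys] H; simpl in *; try lia; auto.
  rewrite IH by lia. rewrite <- seq_shift, map_map. reflexivity.
Qed.

Section RankArgument.

Variables (d : nat) (Rv : nat -> R) (n : nat) (A : seqC d -> seqC d).
Hypothesis A_admissible : admissible d Rv n A.

Lemma admissible_span_images (S : list (Zd d)) : exists (ys : list (seqC d)) (T : list (Zd d * list C)),
  (length ys < n)%nat /\ map fst T = S /\
  forall t, In t T -> length (snd t) = length ys /\ forall k, A (unit_seq (fst t)) k = lincomb (snd t) ys k.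
Proof.
  destruct A_admissible as [_ [_ [ys [Hlen Hspan]]]]. exists ys.
  induction S as [|s S [T [_ [E1 E2]]]].
  - exists nil; simpl; repeat split; auto; tauto.
  - destruct (Hspan (unit_seq s) (unit_seq_in_W Rv s)) as [cs [Hc1 Hc2]].
    exists ((s, cs) :: T). simpl. rewrite E1. split; [auto|split; [auto|]].
    intros t0 [<-|Ht]; auto.
Qed.

Lemma admissible_kernel (S : list (Zd d)) : length S = n ->
  exists Q : list (C * Zd d), map snd Q = S /\ nontrivial Q /\ forall k, A (finseq Q) k = C0.
Proof.
  intros HSn. destruct A_admissible as [_ [A_linear _]].
  destruct (admissible_span_images S) as [ys [T [Hlen [ET HT]]]].
  set (h := fun (t : Zd d * list C) (j : nat) => nth j (snd t) C0).
  assert (HV : (length ys < length (map h T))%nat).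
  { rewrite length_map, <- (length_map fst T), ET. lia. }
  destruct (exists_nontrivial_relation _ _ HV) as [P [EP [HP Hrel]]].
  destruct (recoef_of_map_snd T h P EP) as [P0 [E1 <-]].
  exists (recoef fst P0). split; [|split].
  - unfold recoef. rewrite map_map. simpl. rewrite <- ET, <- E1, map_map. reflexivity.
  - destruct (nontrivial_recoef _ _ HP) as [p [Hp Hp0]].
    exists (fst p, fst (snd p)). split; auto. apply in_map_iff. eauto.
  - intros k. rewrite (A_finseq d Rv A A_linear). unfold recoef. rewrite map_map. simpl.
    rewrite (map_ext_in _ (fun p => Cmult (fst p)
        (csum (map (fun j => Cmult (h (snd p) j) (nth j ys (fun _ => C0) k)) (seq 0 (length ys)))))).
    + rewrite csum_exchange. apply csum_zero. intros j Hj. apply in_seq in Hj.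
      specialize (Hrel j ltac:(lia)). unfold comb, recoef in Hrel. rewrite map_map in Hrel.
      simpl in Hrel. rewrite Hrel. ring.
    + intros p Hp. assert (HpT : In (snd p) T) by (rewrite <- E1; apply in_map; auto).
      destruct (HT _ HpT) as [Hl Hs]. rewrite Hs, lincomb_seq by auto. reflexivity.
Qed.

Lemma A_finseq_scale r Q k : A (finseq (scale_coef r Q)) k = Cmult (RtoC r) (A (finseq Q) k).
Proof.
  destruct A_admissible as [_ [A_linear _]].
  rewrite !(A_finseq d Rv A A_linear). unfold scale_coef. rewrite map_map, <- csum_scal.
  f_equal. apply map_ext. intros p. simpl. cring.
Qed.

(** Test [I_d - A] on the normalised kernel element of [admissible_kernel]: on the span of these
    unit sequences the [L_2] norm is at least [T0^(-1/2)] times the Sobolev norm. *)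
Lemma approx_error_lower (S : list (Zd d)) T0 M : NoDup S -> length S = n ->
  (forall k, In k S -> sob_weight d Rv k <= T0) -> err_le d Rv A M -> / T0 <= M ^ 2.
Proof.
  intros HS HSn HT [HM Herr].
  destruct (admissible_kernel S HSn) as [Q [EQ [[q [Hq Hq0]] HAQ]]].
  set (W0 := coef_mass (sob_weight d Rv) Q). set (N0 := coef_mass (one_weight d) Q).
  assert (HN0 : 0 < N0).
  { eapply Rlt_le_trans; [apply (Cnorm2_pos _ Hq0)|].
    unfold N0, coef_mass, one_weight. rewrite <- (Rmult_1_l (Cnorm2 (fst q))).
    apply (rsum_ge_term (fun p => 1 * Cnorm2 (fst p))); auto.
    intros p _. rewrite Rmult_1_l. apply Cnorm2_nonneg. }
  assert (HWT : W0 <= T0 * N0).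
  { unfold N0, W0, coef_mass. rewrite <- rsum_scal. apply rsum_le. intros p Hp.
    assert (HpS : In (snd p) S) by (rewrite <- EQ; apply in_map; auto).
    pose proof (HT _ HpS). pose proof (Cnorm2_nonneg (fst p)). unfold one_weight. nra. }
  assert (HNW : N0 <= W0).
  { apply rsum_le. intros p _. pose proof (sob_weight_ge1 d Rv (snd p)).
    pose proof (Cnorm2_nonneg (fst p)). unfold one_weight. nra. }
  set (r := / sqrt W0). set (x := finseq (scale_coef r Q)).
  assert (Hr2 : r ^ 2 = / W0).
  { unfold r. rewrite pow_inv. simpl. rewrite Rmult_1_r, sqrt_sqrt by lra. auto. }
  assert (HQS : map snd (scale_coef r Q) = S).
  { unfold scale_coef. rewrite map_map. auto. }
  assert (Hsupp : forall k, ~ In k S -> x k = C0).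
  { intros k Hk. apply finseq_out. rewrite HQS. auto. }
  assert (Hx : wnorm_le (sob_weight d Rv) x 1).
  { split; [lra|]. intros l Hl.
    eapply Rle_trans; [apply (psum_le_of_support _ _ _ S (sob_weight_nonneg d Rv) Hl Hsupp)|].
    rewrite <- HQS. unfold x. rewrite psum_finseq by (rewrite HQS; auto).
    rewrite coef_mass_scale, Hr2. fold W0. field_simplify; lra. }
  destruct (Herr _ (finseq_in_W Rv _) Hx) as [_ HE]. specialize (HE S HS).
  rewrite (psum_ext _ _ x) in HE.
  2:{ intros k. unfold x. rewrite A_finseq_scale, HAQ. destruct (finseq _ k). cring. }
  rewrite <- HQS in HE. unfold x in HE. rewrite psum_finseq, coef_mass_scale, Hr2 in HE
    by (rewrite HQS; auto).
  fold N0 in HE. assert (0 < T0) by nra.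
  apply Rle_trans with (N0 * / W0); [|lra].
  apply Rmult_le_reg_l with (T0 * W0). nra. field_simplify; nra.
Qed.

End RankArgument.

Fixpoint zrange (b : nat) : list Z :=
  match b with
  | 0%nat => 0%Z :: nil
  | S b' => Z.of_nat (S b') :: (- Z.of_nat (S b'))%Z :: zrange b'
  end.

Lemma in_zrange b z : In z (zrange b) <-> (Z.abs z <= Z.of_nat b)%Z.
Proof.
  induction b; simpl.
  - split; [intros [<-|[]]; simpl; lia|intros; left; lia].
  - rewrite IHb. split; [intros [H|[H|H]]; lia|intros H].
    destruct (Z.eq_dec (Z.abs z) (Z.of_nat (S b))); [destruct (Z.abs_eq_or_opp z); lia|right; right; lia].
Qed.

Lemma zrange_NoDup b : NoDup (zrange b).
Proof.
  induction b; simpl; repeat constructor; auto; simpl; try tauto.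
  - intros [H|H]; [lia|apply in_zrange in H; lia].
  - intros H; apply in_zrange in H; lia.
Qed.

Lemma zrange_length b : length (zrange b) = (2 * b + 1)%nat.
Proof. induction b; simpl; auto. rewrite IHb. lia. Qed.

Fixpoint box (bf : R -> nat) (rs : list R) : list (list Z) :=
  match rs with
  | nil => nil :: nil
  | r :: rs' => flat_map (fun z => map (cons z) (box bf rs')) (zrange (bf r))
  end.

Lemma box_length bf rs : INR (length (box bf rs)) = rprod (fun r => 2 * INR (bf r) + 1) rs.
Proof.
  induction rs as [|r rs IH]; simpl; auto.
  assert (forall (Zs : list Z) L, length (flat_map (fun z => map (cons z) L) Zs) = (length Zs * length L)%nat).
  { induction Zs; simpl; auto. intros. rewrite length_app, length_map, IHZs. lia. }
  rewrite H, mult_INR, zrange_length, IH, plus_INR, mult_INR. reflexivity.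
Qed.

Lemma box_NoDup bf rs : NoDup (box bf rs).
Proof.
  induction rs as [|r rs IH]; simpl; [repeat constructor; auto|].
  generalize (zrange_NoDup (bf r)). induction 1 as [|z Zs Hz HZ IHZ]; simpl; [constructor|].
  apply NoDup_app; auto.
  - apply FinFun.Injective_map_NoDup; auto. intros x y H; injection H; auto.
  - intros k Hk Hk'. apply in_map_iff in Hk. destruct Hk as [k1 [<- _]].
    apply in_flat_map in Hk'. destruct Hk' as [z' [Hz' Hk']]. apply in_map_iff in Hk'.
    destruct Hk' as [k2 [E2 _]]. injection E2; intros; subst. contradiction.
Qed.

Lemma in_box bf rs k : In k (box bf rs) <-> Forall2 (fun z r => (Z.abs z <= Z.of_nat (bf r))%Z) k rs.
Proof.
  revert k; induction rs as [|r rs IH]; intros k; simpl.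
  - split; [intros [<-|[]]; constructor|intros H; inversion H; auto].
  - rewrite in_flat_map. split.
    + intros [z [Hz Hk]]. apply in_map_iff in Hk. destruct Hk as [k' [<- Hk']].
      constructor; [apply in_zrange|apply IH]; auto.
    + intros H. inversion H; subst. exists x. split; [apply in_zrange; auto|].
      apply in_map, IH; auto.
Qed.

Fixpoint coord_prod (f : R -> Z -> R) (rs : list R) (k : list Z) : R :=
  match rs, k with r :: rs', z :: k' => f r z * coord_prod f rs' k' | _, _ => 1 end.

Lemma rsum_coord_prod_box bf rs (f : R -> Z -> R) :
  rsum (coord_prod f rs) (box bf rs) = rprod (fun r => rsum (f r) (zrange (bf r))) rs.
Proof.
  induction rs as [|r rs IH]; simpl. unfold rsum, rprod; simpl; ring.
  unfold rprod; simpl; fold (rprod (fun r => rsum (f r) (zrange (bf r))) rs). rewrite <- IH.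
  generalize (zrange (bf r)). intros Zs. induction Zs as [|z Zs IHZ]; simpl.
  - unfold rsum; simpl; ring.
  - rewrite rsum_app, IHZ, rsum_map. simpl. rewrite rsum_scal. ring.
Qed.

Lemma rsum_zrange (f : nat -> R) b :
  rsum (fun z => f (Z.abs_nat z)) (zrange b) = f 0%nat + 2 * rsum f (seq 1 b).
Proof.
  induction b as [|b IH]; [unfold rsum; simpl; ring|].
  change (rsum (fun z => f (Z.abs_nat z)) (zrange (S b))) with (f (Z.abs_nat (Z.of_nat (S b)))
    + (f (Z.abs_nat (- Z.of_nat (S b))) + rsum (fun z => f (Z.abs_nat z)) (zrange b))).
  rewrite IH, seq_S, rsum_app.
  replace (Z.abs_nat (- Z.of_nat (S b))) with (S b) by lia.
  replace (Z.abs_nat (Z.of_nat (S b))) with (S b) by lia.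
  replace (1 + b)%nat with (S b) by lia. unfold rsum at 3; simpl. ring.
Qed.

Lemma count_filter_le {A} (P : A -> bool) (phi : A -> R) l :
  (forall x, 0 <= phi x) -> (forall x, P x = true -> 1 <= phi x) ->
  INR (length (filter P l)) <= rsum phi l.
Proof.
  intros H0 H1. induction l as [|a l IH]; [unfold rsum; simpl; lra|].
  change (rsum phi (a :: l)) with (phi a + rsum phi l). cbn [filter]. destruct (P a) eqn:E.
  - cbn [length]. rewrite S_INR. pose proof (H1 a E). lra.
  - pose proof (H0 a). lra.
Qed.

Fixpoint sob_sum (rs : list R) (k : list Z) : R :=
  match rs, k with r :: rs', z :: k' => pw (Rabs (IZR z)) (2 * r) + sob_sum rs' k' | _, _ => 0 end.

Lemma sob_sum_nonneg rs k : 0 <= sob_sum rs k.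
Proof.
  revert k; induction rs; intros [|z k]; simpl; try lra.
  pose proof (pw_nonneg (Rabs (IZR z)) (2 * a)). pose proof (IHrs k). lra.
Qed.

Lemma rsum_nth_sob_sum (Rv : nat -> R) m : forall a (k : list Z), length k = (a + m)%nat ->
  rsum (fun j => pw (Rabs (IZR (nth j k 0%Z))) (2 * Rv j)) (seq a m)
  = sob_sum (map Rv (seq a m)) (skipn a k).
Proof.
  induction m as [|m IH]; intros a k Hk; simpl; auto.
  assert (Hskip : skipn a k = nth a k 0%Z :: skipn (S a) k).
  { clear -Hk. revert k Hk. induction a; intros [|y k] H; simpl in *; try lia; auto. }
  rewrite Hskip. cbn [seq map sob_sum]. rewrite <- IH by lia. reflexivity.
Qed.

Lemma sob_weight_sob_sum d Rv (k : Zd d) :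
  sob_weight d Rv k = 1 + sob_sum (map Rv (seq 0 d)) (proj1_sig k).
Proof. unfold sob_weight. f_equal. apply (rsum_nth_sob_sum Rv d 0). destruct k; auto. Qed.

Definition toZd (d : nat) (k : list Z) : Zd d :=
  match Nat.eq_dec (length k) d with
  | left H => exist _ k H
  | right _ => exist _ (repeat 0%Z d) (repeat_length _ _)
  end.

Lemma toZd_val d k : length k = d -> proj1_sig (toZd d k) = k.
Proof. intros H. unfold toZd. destruct Nat.eq_dec; simpl; auto. contradiction. Qed.

Lemma toZd_NoDup d (L : list (list Z)) : NoDup L -> (forall k, In k L -> length k = d) ->
  NoDup (map (toZd d) L).
Proof.
  intros HL Hl. induction HL as [|x L Hx HL IH]; simpl; constructor.
  - intros H1. apply in_map_iff in H1. destruct H1 as [y [E Hy]].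
    apply (f_equal (@proj1_sig _ _)) in E. rewrite !toZd_val in E by (apply Hl; simpl; auto).
    subst; contradiction.
  - apply IH. intros; apply Hl; simpl; auto.
Qed.

Lemma box_length_coords bf rs k : In k (box bf rs) -> length k = length rs.
Proof. intros H. apply in_box in H. induction H; simpl; auto. Qed.

Lemma pw_le_of_le z r Y : 0 < r -> 0 < Y -> Rabs (IZR z) <= Rpower Y (/ (2 * r)) ->
  pw (Rabs (IZR z)) (2 * r) <= Y.
Proof.
  intros Hr HY Hz. unfold pw. destruct Req_EM_T as [e|e]; [lra|].
  pose proof (Rabs_pos (IZR z)).
  eapply Rle_trans; [apply Rle_Rpower_l; [lra|split; [lra|apply Hz]]|].
  rewrite Rpower_mult. replace (/ (2 * r) * (2 * r)) with 1 by (field; lra). rewrite Rpower_1; lra.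
Qed.

Lemma lt_of_pw_lt z r T : 0 < r -> 0 < T -> pw (Rabs (IZR z)) (2 * r) < T ->
  Rabs (IZR z) < Rpower T (/ (2 * r)).
Proof.
  intros Hr HT Hz. unfold pw in Hz. destruct Req_EM_T as [e|e]; [rewrite e; apply Rpower_pos|].
  pose proof (Rabs_pos (IZR z)).
  rewrite <- (Rpower_1 (Rabs (IZR z))) by lra. replace 1 with (2 * r * / (2 * r)) by (field; lra).
  rewrite <- Rpower_mult. apply Rlt_Rpower_l; [apply Rinv_0_lt_compat; lra|split; [apply Rpower_pos|auto]].
Qed.

Lemma sob_sum_le rs k c : Forall2 (fun z r => pw (Rabs (IZR z)) (2 * r) <= c) k rs ->
  sob_sum rs k <= INR (length rs) * c.
Proof. induction 1; cbn [sob_sum length]; [simpl; lra|]. rewrite S_INR. lra. Qed.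

Lemma Forall2_of_sob_sum_lt (P : Z -> R -> Prop) rs k c : length k = length rs ->
  (forall z r, In r rs -> pw (Rabs (IZR z)) (2 * r) < c -> P z r) -> sob_sum rs k < c -> Forall2 P k rs.
Proof.
  revert k; induction rs as [|r rs IH]; intros [|z k] Hl HP Hw; simpl in *; try lia; constructor.
  - pose proof (sob_sum_nonneg rs k). apply HP; auto. lra.
  - apply IH; auto. pose proof (pw_nonneg (Rabs (IZR z)) (2 * r)). lra.
Qed.

Lemma rsum_seq_le_length f a k : (forall m, f m <= 1) -> rsum f (seq a k) <= INR k.
Proof.
  revert a; induction k; intros a H; unfold rsum in *; cbn [seq fold_right]; [simpl; lra|].
  rewrite S_INR. pose proof (H a). pose proof (IHk (S a) H). lra.
Qed.

Lemma rsum_split_tail (f : nat -> R) N TB B : (forall m, f m <= 1) -> 0 <= TB ->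
  (forall k, rsum f (seq (S N) k) <= TB) -> rsum f (seq 1 B) <= INR N + TB.
Proof.
  intros H1 HTB Ht. destruct (le_lt_dec B N) as [HBN|HNB].
  - pose proof (rsum_seq_le_length f 1 B H1). apply le_INR in HBN. lra.
  - replace B with (N + (B - N))%nat by lia. rewrite seq_app, rsum_app.
    pose proof (rsum_seq_le_length f 1 N H1). replace (1 + N)%nat with (S N) by lia.
    pose proof (Ht (B - N)%nat). lra.
Qed.

Lemma rsum_geom_le q a k : 0 <= q < 1 -> rsum (fun m => q ^ m) (seq a k) <= q ^ a / (1 - q).
Proof.
  intros Hq. revert a; induction k; intros a; unfold rsum in *; simpl.
  - apply Rdiv_le_0_compat; [apply pow_le|]; lra.
  - pose proof (IHk (S a)). simpl in H. apply Rle_trans with (q ^ a + q * q ^ a / (1 - q)); [lra|].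
    right. field. lra.
Qed.

Lemma rsum_inv_sq_le a k : (2 <= a)%nat ->
  rsum (fun m => / INR m ^ 2) (seq a k) <= / (INR a - 1) - / (INR (a + k) - 1).
Proof.
  revert a; induction k; intros a Ha; unfold rsum in *; cbn [seq fold_right].
  - rewrite Nat.add_0_r. lra.
  - pose proof (IHk (S a) ltac:(lia)). replace (S a + k)%nat with (a + S k)%nat in H by lia.
    rewrite S_INR in H. apply le_INR in Ha. simpl in Ha.
    assert (/ INR a ^ 2 <= / (INR a - 1) - / INR a).
    { apply Rmult_le_reg_l with (INR a ^ 2 * (INR a - 1)). nra. field_simplify; try lra; try nra. }
    replace (INR a + 1 - 1) with (INR a) in H by ring. lra.
Qed.

Definition exp_sum s L B : R := rsum (fun m => exp (- Rpower (INR m / L) s)) (seq 1 B).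

Lemma exp_neg_Rpower_le1 s L m : exp (- Rpower (INR m / L) s) <= 1.
Proof. rewrite <- exp_0. apply exp_le_exp. pose proof (Rpower_pos (INR m / L) s). lra. Qed.

(** For [s >= 1] the terms are dominated by a geometric sequence beyond [m = L]. *)
Lemma exp_sum_le_ge1 s L B : 1 <= s -> 0 < L -> exp_sum s L B <= L + (1 + L) / exp 1.
Proof.
  intros Hs HL. pose proof (nat_floor_spec L HL) as [HN1 HN2]. set (N := nat_floor L) in *.
  set (q := exp (- / L)).
  assert (HiL : 0 < / L) by (apply Rinv_0_lt_compat; auto).
  assert (Hq : 0 <= q < 1).
  { unfold q. split; [left; apply exp_pos|]. rewrite <- exp_0. apply exp_increasing. lra. }
  assert (H1q : / (1 - q) <= 1 + L).
  { assert (1 + / L <= exp (/ L)) by apply exp_ineq1_le.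
    assert (q * exp (/ L) = 1) by (unfold q; rewrite <- exp_plus, Rplus_opp_l; apply exp_0).
    assert (q * (1 + L) <= L).
    { apply Rmult_le_reg_r with (/ L); auto.
      replace (q * (1 + L) * / L) with (q * (1 + / L)) by (field; lra). rewrite Rinv_r; nra. }
    apply Rmult_le_reg_r with (1 - q); [lra|]. rewrite Rinv_l by lra. nra. }
  assert (HqN : q ^ (S N) <= / exp 1).
  { unfold q. rewrite <- exp_mult_INR, <- exp_Ropp. apply exp_le_exp. rewrite S_INR.
    apply Rmult_le_reg_r with L; auto.
    replace ((INR N + 1) * - / L * L) with (-(INR N + 1)) by (field; lra). lra. }
  eapply Rle_trans; [apply (rsum_split_tail _ N (q ^ (S N) / (1 - q)))|].
  - intros m. apply exp_neg_Rpower_le1.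
  - apply Rdiv_le_0_compat; [apply pow_le|]; lra.
  - intros k. eapply Rle_trans; [|apply (rsum_geom_le q (S N) k Hq)].
    apply rsum_le. intros m Hm. apply in_seq in Hm.
    assert (HmL : L < INR m) by (assert (INR (S N) <= INR m) by (apply le_INR; lia); rewrite S_INR in H; lra).
    assert (1 <= INR m / L).
    { apply Rmult_le_reg_r with L; auto. unfold Rdiv. rewrite Rmult_assoc, Rinv_l by lra. lra. }
    pose proof (Rpower_ge_self _ _ H Hs).
    unfold q. rewrite <- exp_mult_INR. apply exp_le_exp. unfold Rdiv in H0. lra.
  - assert (q ^ S N / (1 - q) <= / exp 1 * (1 + L)).
    { unfold Rdiv. apply Rmult_le_compat; auto. apply pow_le; lra. left; apply Rinv_0_lt_compat; lra. }
    unfold Rdiv. lra.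
Qed.

Lemma exp_neg_le_Rpower y q : 0 < y -> 0 < q -> exp (- y) <= Rpower (q / exp 1) q / Rpower y q.
Proof.
  intros Hy Hq. pose proof (exp_pos 1) as He.
  assert (H1 : Rpower (exp 1 / q * y) q <= exp y).
  { replace (exp y) with (Rpower (exp (y / q)) q) by (rewrite Rpower_exp; f_equal; field; lra).
    apply Rle_Rpower_l; [lra|split; [apply Rmult_lt_0_compat; [apply Rdiv_lt_0_compat|]; lra|]].
    replace (exp 1 / q * y) with (exp 1 * (y / q)) by (field; lra). apply exp_ge_e_mul. }
  rewrite <- (Rpower_mult_distr (exp 1 / q) y q) in H1 by (try apply Rdiv_lt_0_compat; lra).
  replace (exp 1 / q) with (/ (q / exp 1)) in H1 by (field; lra).
  rewrite Rpower_Rinv in H1 by (apply Rdiv_lt_0_compat; lra).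
  pose proof (Rpower_pos (q / exp 1) q). pose proof (Rpower_pos y q).
  rewrite exp_Ropp. replace (Rpower (q / exp 1) q / Rpower y q) with (/ (/ Rpower (q / exp 1) q * Rpower y q))
    by (field; lra).
  apply Rinv_le_contravar; auto. apply Rmult_lt_0_compat; auto. apply Rinv_0_lt_compat; auto.
Qed.

(** For general [s > 0] the terms are dominated by [K^2 L^2 / m^2], by [exp_neg_le_Rpower] with [q = 2/s]. *)
Lemma exp_sum_le s L B : 0 < s -> 0 < L -> exp_sum s L B <= 2 * Rpower (2 / (s * exp 1)) (/ s) * L + 1.
Proof.
  intros Hs HL. pose proof (exp_pos 1) as He.
  set (K := Rpower (2 / (s * exp 1)) (/ s)).
  assert (HK : 0 < K) by apply Rpower_pos.
  assert (HK2 : K ^ 2 = Rpower (2 / s / exp 1) (2 / s)).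
  { unfold K. rewrite <- Rpower_2, Rpower_mult by apply Rpower_pos. f_equal; field; lra. }
  assert (Hpt : forall m, (1 <= m)%nat -> exp (- Rpower (INR m / L) s) <= K ^ 2 * L ^ 2 * / INR m ^ 2).
  { intros m Hm. assert (Hm' : 0 < INR m) by (apply lt_0_INR; lia).
    pose proof (exp_neg_le_Rpower _ (2 / s) (Rpower_pos (INR m / L) s) ltac:(apply Rdiv_lt_0_compat; lra)).
    rewrite Rpower_mult in H. replace (s * (2 / s)) with 2 in H by (field; lra).
    rewrite Rpower_2, <- HK2 in H by (apply Rdiv_lt_0_compat; lra).
    eapply Rle_trans; [apply H|]. right. field. split; lra. }
  assert (HKL : 0 < K * L) by nra.
  pose proof (nat_floor_spec (K * L) HKL) as [HN1 HN2]. set (N := S (nat_floor (K * L))).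
  assert (HN : INR N = INR (nat_floor (K * L)) + 1) by apply S_INR.
  eapply Rle_trans; [apply (rsum_split_tail _ N (K ^ 2 * L ^ 2 / INR N))|].
  - intros m. apply exp_neg_Rpower_le1.
  - apply Rdiv_le_0_compat; nra.
  - intros k. eapply Rle_trans.
    + apply rsum_le. intros m Hm. apply in_seq in Hm. apply Hpt. lia.
    + rewrite rsum_scal. pose proof (rsum_inv_sq_le (S N) k ltac:(unfold N; lia)).
      assert (0 < INR (S N + k) - 1).
      { assert (2 <= INR (S N + k)) by (replace 2 with (INR 2) by (simpl; ring); apply le_INR; unfold N; lia). lra. }
      pose proof (Rinv_0_lt_compat _ H0). rewrite S_INR in H. replace (INR N + 1 - 1) with (INR N) in H by ring.
      unfold Rdiv. apply Rmult_le_compat_l; nra.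
  - assert (K ^ 2 * L ^ 2 / INR N <= K * L).
    { apply Rmult_le_reg_r with (INR N); [lra|]. unfold Rdiv. rewrite Rmult_assoc, Rinv_l by lra. nra. }
    lra.
Qed.

Lemma theta_le_ge1 s L a b B : 1 <= s -> 0 < L -> a = L * b -> 8 <= a -> 4 <= b ->
  1 + 2 * exp_sum s L B <= a.
Proof.
  intros Hs HL -> Ha Hb. pose proof (exp_sum_le_ge1 s L B Hs HL). pose proof exp_1_ge_2.
  assert ((1 + L) / exp 1 <= (1 + L) / 2).
  { unfold Rdiv. apply Rmult_le_compat_l; [lra|]. apply Rinv_le_contravar; lra. }
  nra.
Qed.

Lemma Rpower_small_ratio_le x : 1 <= x -> Rpower (x / (exp 1 * (2 + x))) x <= 5 / 16.
Proof.
  intros Hx. pose proof exp_1_ge_2. pose proof (exp_pos 1).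
  assert (Hc : 0 < x / (exp 1 * (2 + x))) by (apply Rdiv_lt_0_compat; nra).
  destruct (Rle_dec x 2).
  - assert (x / (exp 1 * (2 + x)) <= 1 / 4).
    { apply Rmult_le_reg_r with (exp 1 * (2 + x)); [nra|]. field_simplify; nra. }
    pose proof (Rpower_le_self (x / (exp 1 * (2 + x))) x ltac:(lra) Hx). lra.
  - assert (x / (exp 1 * (2 + x)) <= / exp 1).
    { apply Rmult_le_reg_r with (exp 1 * (2 + x)); [nra|]. field_simplify; nra. }
    pose proof (Rle_Rpower_l _ _ x ltac:(lra) (conj Hc H1)).
    rewrite Rpower_Rinv in H2 by lra. unfold Rpower at 2 in H2. rewrite ln_exp in H2.
    assert (exp 2 <= exp (x * 1)) by (apply exp_le_exp; lra).
    assert (exp 2 = exp 1 * exp 1) by (rewrite <- exp_plus; f_equal; ring).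
    assert (/ exp (x * 1) <= / exp 2) by (apply Rinv_le_contravar; [apply exp_pos|lra]).
    assert (/ exp 2 <= / 4) by (apply Rinv_le_contravar; nra). lra.
Qed.

Lemma theta_le_lt1 s L a b B : 0 < s < 1 -> 0 < L -> a = L * b ->
  2 * Rpower 4 (/ s) <= a -> 2 * Rpower (4 + 2 * / s) (/ s) <= b ->
  1 + 2 * exp_sum s L B <= a.
Proof.
  intros Hs HL Hab Ha Hb. pose proof (exp_sum_le s L B ltac:(lra) HL).
  pose proof exp_1_ge_2. pose proof (exp_pos 1).
  set (x := / s) in *.
  assert (Hx : 1 <= x) by (unfold x; rewrite <- Rinv_1; apply Rinv_le_contravar; lra).
  set (K := Rpower (2 / (s * exp 1)) x) in *.
  assert (H4x : 4 <= Rpower 4 x) by (rewrite <- (Rpower_1 4) at 1 by lra; apply Rle_Rpower; lra).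
  pose proof (Rpower_pos (4 + 2 * x) x).
  assert (HK : K = Rpower (x / (exp 1 * (2 + x))) x * Rpower (4 + 2 * x) x).
  { unfold K. rewrite Rpower_mult_distr by (try apply Rdiv_lt_0_compat; nra). f_equal.
    unfold x. field. lra. }
  pose proof (Rpower_small_ratio_le x Hx).
  assert (4 * K <= 5 / 8 * b) by (rewrite HK; nra).
  assert (4 * K * L <= 5 / 8 * a) by (subst a; nra).
  lra.
Qed.

Lemma Rmaxd_ge d Rv j : (j < d)%nat -> Rv j <= Rmaxd d Rv.
Proof.
  intros Hj. assert (Hin : In j (seq 0 d)) by (apply in_seq; lia). clear Hj. unfold Rmaxd.
  induction (seq 0 d); simpl in *; [contradiction|].
  destruct Hin as [<-|Hin]; [apply Rmax_l|eapply Rle_trans; [apply IHl; auto|apply Rmax_r]].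
Qed.

Lemma Rmind_le d Rv j : (j < d)%nat -> Rmind d Rv <= Rv j.
Proof.
  intros Hj. assert (Hin : In j (seq 0 d)) by (apply in_seq; lia). clear Hj. unfold Rmind.
  induction (seq 0 d); simpl in *; [contradiction|].
  destruct Hin as [<-|Hin]; [apply Rmin_l|eapply Rle_trans; [apply Rmin_r|apply IHl; auto]].
Qed.

Lemma Rmind_pos d Rv : (forall j, (j < d)%nat -> 0 < Rv j) -> (1 <= d)%nat -> 0 < Rmind d Rv.
Proof.
  intros Hpos Hd. unfold Rmind.
  assert (H : forall j, In j (seq 0 d) -> 0 < Rv j) by (intros j Hj; apply in_seq in Hj; apply Hpos; lia).
  induction (seq 0 d); simpl; [apply Hpos; lia|].
  apply Rmin_glb_lt; [apply H; left|apply IHl; intros; apply H; right]; auto.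
Qed.

Definition inv_sum (d : nat) (Rv : nat -> R) : R := rsum (fun j => / Rv j) (seq 0 d).

Lemma gR_inv_sum d Rv : gR d Rv = / inv_sum d Rv.
Proof. reflexivity. Qed.

Lemma rsum_inv_bounds (Rv : nat -> R) l u v : 0 < v -> (forall j, In j l -> v <= Rv j <= u) ->
  INR (length l) / u <= rsum (fun j => / Rv j) l <= INR (length l) / v.
Proof.
  intros Hv Hb. induction l as [|a l IH]; [unfold rsum, Rdiv; simpl; rewrite !Rmult_0_l; lra|].
  destruct (Hb a (or_introl eq_refl)). cbn [length]. rewrite S_INR.
  destruct (IH (fun j Hj => Hb j (or_intror Hj))).
  assert (/ Rv a <= / v) by (apply Rinv_le_contravar; lra).
  assert (/ u <= / Rv a) by (apply Rinv_le_contravar; lra).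
  change (rsum (fun j => / Rv j) (a :: l)) with (/ Rv a + rsum (fun j => / Rv j) l).
  unfold Rdiv in *. lra.
Qed.

Lemma inv_sum_bounds d Rv u v : 0 < v -> (forall j, (j < d)%nat -> v <= Rv j <= u) ->
  INR d / u <= inv_sum d Rv <= INR d / v.
Proof.
  intros Hv H. unfold inv_sum. rewrite <- (length_seq d 0) at 1 4. apply rsum_inv_bounds; auto.
  intros j Hj. apply in_seq in Hj. apply H. lia.
Qed.

Lemma rprod_Rpower_inv Y (Rv : nat -> R) l : 0 < Y -> (forall j, In j l -> 0 < Rv j) ->
  rprod (fun r => Rpower Y (/ (2 * r))) (map Rv l) = Rpower Y (rsum (fun j => / Rv j) l / 2).
Proof.
  intros HY. unfold rprod, rsum. induction l as [|a l IH]; simpl; intros H.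
  - replace (0 / 2) with 0 by field. rewrite Rpower_O; auto.
  - rewrite IH, <- Rpower_plus by auto. f_equal.
    pose proof (H a (or_introl eq_refl)). field. lra.
Qed.

(** * The lower bound *)

Lemma NoDup_firstn {A} (l : list A) k : NoDup l -> NoDup (firstn k l).
Proof. intros H. rewrite <- (firstn_skipn k l) in H. apply NoDup_app_remove_r in H. auto. Qed.

Lemma in_firstn {A} (l : list A) k x : In x (firstn k l) -> In x l.
Proof. intros H. rewrite <- (firstn_skipn k l). apply in_or_app; auto. Qed.

Lemma low_weight_points d Rv n Y : (forall j, (j < d)%nat -> 0 < Rv j) -> 0 < Y ->
  INR n <= rprod (fun r => Rpower Y (/ (2 * r))) (map Rv (seq 0 d)) ->
  exists S : list (Zd d), NoDup S /\ length S = n /\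
    forall k, In k S -> sob_weight d Rv k <= 1 + INR d * Y.
Proof.
  intros Hpos HY Hn. set (rs := map Rv (seq 0 d)).
  assert (Hrs : forall r, In r rs -> 0 < r).
  { intros r Hr. apply in_map_iff in Hr. destruct Hr as [j [<- Hj]]. apply in_seq in Hj. apply Hpos; lia. }
  set (bf := fun r => nat_floor (Rpower Y (/ (2 * r)))).
  set (bx := box bf rs).
  assert (Hbl : forall k, In k bx -> length k = d).
  { intros k Hk. apply box_length_coords in Hk. rewrite Hk. unfold rs. rewrite length_map, length_seq; auto. }
  assert (Hlen : (n <= length bx)%nat).
  { apply INR_le. unfold bx. rewrite box_length. eapply Rle_trans; [apply Hn|]. apply rprod_le.
    intros r Hr. split; [left; apply Rpower_pos|].
    pose proof (nat_floor_spec _ (Rpower_pos Y (/ (2 * r)))). fold (bf r) in H. pose proof (pos_INR (bf r)).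
    destruct (Rle_dec 1 (Rpower Y (/ (2 * r)))); lra. }
  exists (firstn n (map (toZd d) bx)). split; [|split].
  - apply NoDup_firstn, toZd_NoDup; [apply box_NoDup|auto].
  - rewrite length_firstn, length_map. lia.
  - intros k Hk. apply in_firstn, in_map_iff in Hk. destruct Hk as [k' [<- Hk']].
    rewrite sob_weight_sob_sum, toZd_val by auto. fold rs.
    assert (Hlr : length rs = d) by (unfold rs; rewrite length_map, length_seq; auto).
    enough (sob_sum rs k' <= INR (length rs) * Y) by (rewrite Hlr in H; lra).
    apply sob_sum_le. apply in_box in Hk'. clear -Hk' Hrs HY.
    induction Hk' as [|z r k rs Hz _ IH]; constructor.
    + apply pw_le_of_le; auto using in_eq.
      pose proof (nat_floor_spec _ (Rpower_pos Y (/ (2 * r)))) as [Hf _].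
      eapply Rle_trans; [|apply Hf]. rewrite Rabs_Zabs, INR_IZR_INZ. apply IZR_le. auto.
    + apply IH. intros; apply Hrs; simpl; auto.
Qed.

Lemma Rpower_INR_gR_sq n d Rv : Rpower (INR n) (gR d Rv) ^ 2 = Rpower (INR n) (2 * gR d Rv).
Proof. rewrite <- Rpower_2, Rpower_mult by apply Rpower_pos. f_equal; ring. Qed.

Lemma INR_eq_rprod d Rv n : (forall j, (j < d)%nat -> 0 < Rv j) -> 0 < inv_sum d Rv -> (1 <= n)%nat ->
  INR n = rprod (fun r => Rpower (Rpower (INR n) (2 * gR d Rv)) (/ (2 * r))) (map Rv (seq 0 d)).
Proof.
  intros Hpos Hs Hn. assert (1 <= INR n) by (apply (le_INR 1); auto).
  rewrite rprod_Rpower_inv by (try apply Rpower_pos; intros j Hj; apply in_seq in Hj; apply Hpos; lia).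
  rewrite Rpower_mult, gR_inv_sum. fold (inv_sum d Rv).
  replace (2 * / inv_sum d Rv * (inv_sum d Rv / 2)) with 1 by (field; lra). rewrite Rpower_1; lra.
Qed.

Lemma approx_set_sq_lower d Rv n M : (forall j, (j < d)%nat -> 0 < Rv j) -> 0 < inv_sum d Rv ->
  (1 <= n)%nat -> approx_set d Rv n M -> / (1 + INR d * Rpower (INR n) (2 * gR d Rv)) <= M ^ 2.
Proof.
  intros Hpos Hs Hn [A [Hadm Herr]].
  destruct (low_weight_points d Rv n (Rpower (INR n) (2 * gR d Rv)) Hpos (Rpower_pos _ _))
    as [S [HS [HSn HSw]]]; [rewrite <- INR_eq_rprod; auto; lra|].
  exact (approx_error_lower d Rv n A Hadm S _ M HS HSn HSw Herr).
Qed.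

Lemma approx_number_lower d Rv n a u v p : (1 <= d)%nat -> (forall j, (j < d)%nat -> 0 < Rv j) ->
  (forall j, (j < d)%nat -> v <= Rv j <= u) -> 0 < v -> v <= p -> (1 <= n)%nat ->
  is_approx_number d Rv n a ->
  Rpower 2 (v - p) * sqrt (1 / (exp 1 * (INR d + 2 * u))) <= Rpower (INR n) (gR d Rv) * a.
Proof.
  intros Hd Hpos Hb Hv Hvp Hn [_ Ha].
  assert (Hdr : 1 <= INR d) by (apply (le_INR 1); auto).
  assert (Hvu : v <= u) by (destruct (Hb 0%nat ltac:(lia)); lra).
  pose proof (inv_sum_bounds d Rv u v Hv Hb) as [Hs _].
  assert (HS : 0 < inv_sum d Rv) by (assert (0 < INR d / u) by (apply Rdiv_lt_0_compat; lra); lra).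
  pose proof exp_1_ge_2.
  set (ng := Rpower (INR n) (gR d Rv)). set (Y := Rpower (INR n) (2 * gR d Rv)).
  assert (HY : 1 <= Y).
  { apply Rpower_ge1; [apply (le_INR 1); auto|]. rewrite gR_inv_sum.
    left; apply Rmult_lt_0_compat; [lra|apply Rinv_0_lt_compat; auto]. }
  assert (Hng : 0 < ng) by apply Rpower_pos.
  set (c := 1 / (exp 1 * (INR d + 2 * u))).
  assert (Hc : 0 < c) by (apply Rdiv_lt_0_compat; nra).
  set (lo := Rpower 2 (v - p) * sqrt c).
  assert (Hlo0 : 0 <= lo) by (apply Rmult_le_pos; [left; apply Rpower_pos|apply sqrt_pos]).
  assert (Hlo2 : lo ^ 2 <= c).
  { unfold lo. rewrite Rpow_mult_distr, pow2_sqrt by lra.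
    assert (Rpower 2 (v - p) <= 1) by (rewrite <- (Rpower_O 2) by lra; apply Rle_Rpower; lra).
    pose proof (Rpower_pos 2 (v - p)). assert (Rpower 2 (v - p) ^ 2 <= 1) by nra. nra. }
  assert (HcY : c / Y <= / (1 + INR d * Y)).
  { unfold c, Rdiv. rewrite Rmult_1_l, <- Rinv_mult. apply Rinv_le_contravar; [nra|].
    assert (2 * INR d <= exp 1 * (INR d + 2 * u)) by nra.
    apply Rle_trans with (2 * INR d * Y); [nra|]. apply Rmult_le_compat_r; lra. }
  enough (Hle : lo / ng <= a) by (apply Rmult_le_reg_l with (/ ng); [apply Rinv_0_lt_compat; auto|];
    replace (/ ng * (ng * a)) with a by (field; lra); unfold Rdiv in Hle; lra).
  apply Ha. intros M HM. pose proof (approx_set_sq_lower d Rv n M Hpos HS Hn HM) as HMY. fold Y in HMY.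
  destruct HM as [A [_ [HM0 _]]].
  assert (Hsq : (lo / ng) ^ 2 <= M ^ 2).
  { unfold Rdiv. rewrite Rpow_mult_distr, pow_inv. unfold ng.
    rewrite Rpower_INR_gR_sq. fold Y.
    apply Rle_trans with (c / Y); [|lra]. apply Rmult_le_compat_r; [left; apply Rinv_0_lt_compat|]; lra. }
  apply Rsqr_incr_0_var; [unfold Rsqr; simpl in Hsq; lra|auto].
Qed.

(** * The upper bound *)

Section Truncation.

Variables (d : nat) (Rv : nat -> R) (F : list (Zd d)).

Definition truncate (x : seqC d) : seqC d := fun k => if in_dec Zd_eq_dec k F then x k else C0.

Lemma lincomb_unit_seq (x : seqC d) (G : list (Zd d)) k :
  lincomb (map x G) (map unit_seq G) k = finseq (map (fun k' => (x k', k')) G) k.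
Proof. induction G; simpl; auto. unfold lincomb in *. simpl. rewrite IHG. reflexivity. Qed.

Lemma truncate_admissible n : NoDup F -> (length F < n)%nat -> admissible d Rv n truncate.
Proof.
  intros HF Hn. split; [|split].
  - intros x _. apply (in_wl2_of_support _ _ F); [apply one_weight_nonneg|].
    intros k Hk. unfold truncate. destruct in_dec; tauto.
  - intros x y a b _ _ k. unfold truncate. destruct in_dec; auto. cring.
  - exists (map unit_seq F). split; [rewrite length_map; auto|].
    intros x _. exists (map x F). split; [rewrite !length_map; auto|].
    intros k. rewrite lincomb_unit_seq.
    unfold truncate. destruct in_dec as [Hk|Hk]; symmetry.
    + apply (finseq_at _ (x k, k)); [rewrite map_map; simpl; rewrite map_id; auto|].
      apply in_map_iff. eauto.
    + apply finseq_out. rewrite map_map; simpl; rewrite map_id. auto.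
Qed.

Lemma psum_truncate_error_le T (x : seqC d) l : 0 < T ->
  (forall k, sob_weight d Rv k < T -> In k F) ->
  psum (one_weight d) (fun k => Csub (x k) (truncate x k)) l <= / T * psum (sob_weight d Rv) x l.
Proof.
  intros HT HF. rewrite !psum_rsum, <- rsum_scal. apply rsum_le. intros k _.
  pose proof (Cnorm2_nonneg (x k)). pose proof (Rinv_0_lt_compat _ HT).
  unfold one_weight, truncate. destruct in_dec as [Hk|Hk].
  - replace (Csub (x k) (x k)) with C0 by cring. rewrite Cnorm2_C0.
    pose proof (sob_weight_nonneg d Rv k). rewrite Rmult_0_r. repeat apply Rmult_le_pos; lra.
  - replace (Csub (x k) C0) with (x k) by cring.
    assert (T <= sob_weight d Rv k) by (destruct (Rlt_dec (sob_weight d Rv k) T); [exfalso|]; auto; lra).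
    apply Rmult_le_reg_l with T; auto.
    replace (T * (/ T * (sob_weight d Rv k * Cnorm2 (x k)))) with (sob_weight d Rv k * Cnorm2 (x k))
      by (field; lra).
    nra.
Qed.

Lemma truncation_approx n T : 0 < T -> NoDup F -> (length F < n)%nat ->
  (forall k, sob_weight d Rv k < T -> In k F) -> approx_set d Rv n (/ sqrt T).
Proof.
  intros HT HF Hn Hc. exists truncate. split; [apply truncate_admissible; auto|].
  assert (HsT : 0 <= / sqrt T) by (left; apply Rinv_0_lt_compat, sqrt_lt_R0; auto).
  split; [auto|]. intros x _ [_ Hw]. split; [auto|]. intros l Hl.
  eapply Rle_trans; [apply (psum_truncate_error_le T); auto|].
  rewrite pow_inv, <- Rsqr_pow2, Rsqr_sqrt by lra. specialize (Hw l Hl).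
  pose proof (Rinv_0_lt_compat _ HT). simpl in Hw. nra.
Qed.

End Truncation.

Definition theta (lam r : R) (B : nat) : R :=
  1 + 2 * rsum (fun m => exp (- lam * Rpower (INR m) (2 * r))) (seq 1 B).

Lemma exp_sob_sum lam rs k : length k = length rs ->
  exp (- lam * sob_sum rs k) = coord_prod (fun r z => exp (- lam * pw (Rabs (IZR z)) (2 * r))) rs k.
Proof.
  revert k; induction rs; intros [|z k] H; simpl in *; try lia; [rewrite Rmult_0_r, exp_0; auto|].
  rewrite <- IHrs, <- exp_plus by lia. f_equal. ring.
Qed.

Lemma rsum_exp_sob_sum_box lam B rs :
  rsum (fun k => exp (- lam * sob_sum rs k)) (box (fun _ => B) rs) = rprod (fun r => theta lam r B) rs.
Proof.
  rewrite (rsum_ext_in _ (coord_prod (fun r z => exp (- lam * pw (Rabs (IZR z)) (2 * r))) rs))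
    by (intros k Hk; apply exp_sob_sum, (box_length_coords _ _ _ Hk)).
  rewrite rsum_coord_prod_box. unfold rprod. f_equal. apply functional_extensionality; intros r.
  apply functional_extensionality; intros acc. f_equal.
  rewrite (rsum_ext_in _ (fun z => (fun m => exp (- lam * pw (INR m) (2 * r))) (Z.abs_nat z)))
    by (intros z _; rewrite INR_IZR_INZ, Nat2Z.inj_abs_nat, <- Rabs_Zabs; reflexivity).
  rewrite (rsum_zrange (fun m => exp (- lam * pw (INR m) (2 * r)))). unfold theta. f_equal.
  - unfold pw. simpl. destruct Req_EM_T; [|lra]. rewrite Rmult_0_r, exp_0. auto.
  - f_equal. apply rsum_ext_in. intros m Hm. apply in_seq in Hm. unfold pw.
    destruct Req_EM_T as [e|]; auto. assert (0 < INR m) by (apply lt_0_INR; lia). lra.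
Qed.

(** Rankin's trick: [1_{w < T} <= exp (lam (T - w))] for [lam > 0]. *)
Lemma low_weight_count d Rv T lam B : 0 < T -> 0 < lam -> (forall j, (j < d)%nat -> 0 < Rv j) ->
  (forall j, (j < d)%nat -> Rpower T (/ (2 * Rv j)) <= INR B) ->
  exists F : list (Zd d), NoDup F /\
    INR (length F) <= exp (lam * (T - 1)) * rprod (fun r => theta lam r B) (map Rv (seq 0 d)) /\
    forall k, sob_weight d Rv k < T -> In k F.
Proof.
  intros HT Hlam Hpos HB. set (rs := map Rv (seq 0 d)).
  assert (Hrs : forall r, In r rs -> 0 < r /\ Rpower T (/ (2 * r)) <= INR B).
  { intros r Hr. apply in_map_iff in Hr. destruct Hr as [j [<- Hj]]. apply in_seq in Hj.
    split; [apply Hpos|apply HB]; lia. }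
  set (P := fun k => if Rlt_dec (1 + sob_sum rs k) T then true else false).
  set (bx := box (fun _ => B) rs).
  assert (Hbl : forall k, In k bx -> length k = d).
  { intros k Hk. apply box_length_coords in Hk. rewrite Hk. unfold rs. rewrite length_map, length_seq; auto. }
  exists (map (toZd d) (filter P bx)). split; [|split].
  - apply toZd_NoDup; [apply NoDup_filter, box_NoDup|].
    intros k Hk. apply filter_In in Hk. apply Hbl; tauto.
  - rewrite length_map.
    eapply Rle_trans; [apply (count_filter_le P (fun k => exp (lam * (T - 1)) * exp (- lam * sob_sum rs k)))|].
    + intros k. pose proof (exp_pos (lam * (T - 1))). pose proof (exp_pos (- lam * sob_sum rs k)). nra.
    + intros k Hk. unfold P in Hk. destruct Rlt_dec as [Hlt|]; [|discriminate].
      rewrite <- exp_plus. apply Rle_trans with (exp 0); [rewrite exp_0; lra|]. apply exp_le_exp.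
      assert (0 <= lam * (T - 1 - sob_sum rs k)) by (apply Rmult_le_pos; lra). lra.
    + rewrite rsum_scal. unfold bx. rewrite rsum_exp_sob_sum_box. lra.
  - intros k Hk. rewrite sob_weight_sob_sum in Hk. fold rs in Hk.
    apply in_map_iff. exists (proj1_sig k). split; [apply Zd_val_inj, toZd_val; destruct k; auto|].
    apply filter_In. split; [|unfold P; destruct Rlt_dec; auto].
    apply in_box. apply (Forall2_of_sob_sum_lt _ _ _ T); [destruct k; simpl; unfold rs; rewrite length_map, length_seq; auto| |lra].
    intros z r Hr Hz. destruct (Hrs r Hr) as [Hr0 HrB].
    pose proof (lt_of_pw_lt z r T Hr0 HT Hz). rewrite Rabs_Zabs, INR_IZR_INZ in *.
    apply Z.lt_le_incl, lt_IZR. lra.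
Qed.

Lemma theta_eq_exp_sum lam r B : 0 < lam -> 0 < r ->
  theta lam r B = 1 + 2 * exp_sum (2 * r) (Rpower (/ lam) (/ (2 * r))) B.
Proof.
  intros Hlam Hr. unfold theta, exp_sum. do 2 f_equal. apply rsum_ext_in. intros m Hm.
  apply in_seq in Hm. assert (0 < INR m) by (apply lt_0_INR; lia).
  rewrite Rpower_div, Rpower_mult by (auto; apply Rpower_pos).
  replace (/ (2 * r) * (2 * r)) with 1 by (field; lra).
  rewrite Rpower_1 by (apply Rinv_0_lt_compat; auto). f_equal. field. lra.
Qed.

Section CoordinateFactor.

Variables (r u v p lam H : R) (B : nat).
Hypotheses (Hv : 0 < v) (Hvr : v <= r) (Hru : r <= u) (Hup : u <= p) (Hp : 1 / 2 <= p) (Hlam : 0 < lam).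
Hypothesis HH : H = Rpower 2 (p + u) * Rpower (2 + 1 / (2 * v)) (u / (2 * v)).
Hypothesis HQ : Rpower 4 (2 * p) * Rpower 2 (2 * u) <= / lam * H ^ 2.

Let L := Rpower (/ lam) (/ (2 * r)).
Let a := Rpower (/ lam * H ^ 2) (/ (2 * r)).
Let b := Rpower H (/ r).

Lemma coord_H_pos : 0 < H.
Proof. rewrite HH. apply Rmult_lt_0_compat; apply Rpower_pos. Qed.

Lemma coord_a_eq : a = L * b.
Proof.
  pose proof coord_H_pos. unfold a, b, L.
  rewrite <- Rpower_mult_distr by (try apply pow_lt; try apply Rinv_0_lt_compat; auto).
  f_equal. rewrite <- Rpower_2, Rpower_mult by auto. f_equal. field. lra.
Qed.

Lemma coord_a_ge : Rpower 4 (p / r) * Rpower 2 (u / r) <= a.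
Proof.
  assert (Hb : 0 < Rpower 4 (2 * p) * Rpower 2 (2 * u)) by (apply Rmult_lt_0_compat; apply Rpower_pos).
  eapply Rle_trans; [|apply Rle_Rpower_l; [left; apply Rinv_0_lt_compat; lra|split; [apply Hb|apply HQ]]].
  rewrite <- Rpower_mult_distr, !Rpower_mult by apply Rpower_pos.
  right. f_equal; f_equal; field; lra.
Qed.

Lemma coord_b_eq : b = Rpower 2 ((p + u) / r) * Rpower (2 + 1 / (2 * v)) (u / (2 * v) / r).
Proof.
  unfold b. rewrite HH, <- Rpower_mult_distr, !Rpower_mult by apply Rpower_pos.
  f_equal; f_equal; field; lra.
Qed.

Lemma theta_le_coord_large : 1 / 2 <= r -> theta lam r B <= a.
Proof.
  intros Hr2. rewrite theta_eq_exp_sum by lra.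
  assert (Hpr : 1 <= p / r) by (apply Rmult_le_reg_r with r; [lra|]; unfold Rdiv; rewrite Rmult_assoc, Rinv_l; lra).
  assert (Hur : 1 <= u / r) by (apply Rmult_le_reg_r with r; [lra|]; unfold Rdiv; rewrite Rmult_assoc, Rinv_l; lra).
  apply (theta_le_ge1 _ _ _ b); [lra|apply Rpower_pos|apply coord_a_eq| |].
  - pose proof coord_a_ge. pose proof (Rpower_ge_self 4 _ ltac:(lra) Hpr).
    pose proof (Rpower_ge_self 2 _ ltac:(lra) Hur). nra.
  - rewrite coord_b_eq.
    assert (4 <= Rpower 2 ((p + u) / r)).
    { replace 4 with (Rpower 2 2) by (rewrite Rpower_2; lra). apply Rle_Rpower; [lra|].
      apply Rmult_le_reg_r with r; [lra|]. unfold Rdiv. rewrite Rmult_assoc, Rinv_l; lra. }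
    assert (1 <= Rpower (2 + 1 / (2 * v)) (u / (2 * v) / r)).
    { apply Rpower_ge1; [assert (0 < 1 / (2 * v)) by (apply Rdiv_lt_0_compat; lra); lra|].
      repeat apply Rdiv_le_0_compat; lra. }
    nra.
Qed.

Lemma theta_le_coord_small : r < 1 / 2 -> theta lam r B <= a.
Proof.
  intros Hr2. rewrite theta_eq_exp_sum by lra. set (x := / (2 * r)).
  assert (Hx : 1 <= x) by (unfold x; rewrite <- Rinv_1; apply Rinv_le_contravar; lra).
  assert (Hxv : x <= 1 / (2 * v)) by (unfold x, Rdiv; rewrite Rmult_1_l; apply Rinv_le_contravar; lra).
  assert (Hx_pu : x + 1 <= (p + u) / r).
  { unfold x. apply Rmult_le_reg_r with (2 * r); [lra|]. field_simplify; lra. }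
  apply (theta_le_lt1 _ _ _ b); [lra|apply Rpower_pos|apply coord_a_eq| |]; fold x.
  - pose proof coord_a_ge. pose proof (Rpower_pos 4 x).
    assert (Rpower 4 x <= Rpower 4 (p / r)).
    { apply Rle_Rpower; [lra|]. unfold x. apply Rmult_le_reg_r with (2 * r); [lra|]. field_simplify; lra. }
    assert (2 <= Rpower 2 (u / r)).
    { apply Rpower_ge_self; [lra|]. apply Rmult_le_reg_r with r; [lra|].
      unfold Rdiv. rewrite Rmult_assoc, Rinv_l; lra. }
    nra.
  - rewrite coord_b_eq.
    assert (E1 : 2 * Rpower 2 x <= Rpower 2 ((p + u) / r)).
    { eapply Rle_trans; [|apply Rle_Rpower, Hx_pu; lra]. rewrite Rpower_plus, Rpower_1; lra. }
    assert (E2 : Rpower (2 + x) x <= Rpower (2 + 1 / (2 * v)) (u / (2 * v) / r)).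
    { apply Rle_trans with (Rpower (2 + 1 / (2 * v)) x); [apply Rle_Rpower_l; lra|].
      apply Rle_Rpower; [lra|]. unfold x. apply Rmult_le_reg_r with (2 * r); [lra|].
      field_simplify; try lra. apply Rmult_le_reg_r with v; auto. field_simplify; lra. }
    replace (4 + 2 * x) with (2 * (2 + x)) by ring. rewrite <- Rpower_mult_distr by lra.
    pose proof (Rpower_pos 2 x). pose proof (Rpower_pos (2 + x) x). nra.
Qed.

Lemma coord_factor_le : exp (1 / (2 * u)) * theta lam r B <= Rpower (/ lam * H ^ 2 * exp 1) (/ (2 * r)).
Proof.
  assert (Ha : theta lam r B <= a) by (destruct (Rle_dec (1 / 2) r); [apply theta_le_coord_large|apply theta_le_coord_small]; lra).
  assert (HQ0 : 0 < / lam * H ^ 2) by (apply Rmult_lt_0_compat; [apply Rinv_0_lt_compat|apply pow_lt, coord_H_pos]; auto).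
  rewrite <- Rpower_mult_distr, Rpower_exp, Rmult_1_r by (auto; apply exp_pos).
  fold a. rewrite Rmult_comm. apply Rmult_le_compat; auto.
  - unfold theta. pose proof (rsum_nonneg (fun m => exp (- lam * Rpower (INR m) (2 * r))) (seq 1 B)
      (fun m _ => Rlt_le _ _ (exp_pos _))). lra.
  - left; apply exp_pos.
  - apply exp_le_exp. unfold Rdiv. rewrite Rmult_1_l. apply Rinv_le_contravar; lra.
Qed.

End CoordinateFactor.

Lemma exists_nat_bound_Rpower d Rv T v : 0 < T -> 0 < v -> (forall j, (j < d)%nat -> v <= Rv j) ->
  exists B : nat, forall j, (j < d)%nat -> Rpower T (/ (2 * Rv j)) <= INR B.
Proof.
  intros HT Hv Hb. pose proof (nat_floor_spec _ (Rpower_pos T (/ (2 * v)))) as [_ HB].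
  exists (S (nat_floor (Rpower T (/ (2 * v))))). intros j Hj. specialize (Hb j Hj). rewrite S_INR.
  assert (Hinv : 0 <= / (2 * Rv j) <= / (2 * v)) by (split; [left; apply Rinv_0_lt_compat|apply Rinv_le_contravar]; lra).
  destruct (Rle_dec 1 T).
  - assert (Rpower T (/ (2 * Rv j)) <= Rpower T (/ (2 * v))) by (apply Rle_Rpower; lra). lra.
  - assert (Rpower T (/ (2 * Rv j)) <= 1) by (apply Rpower_le1; lra).
    pose proof (pos_INR (nat_floor (Rpower T (/ (2 * v))))). lra.
Qed.

Section UpperBound.

Variables (d : nat) (Rv : nat -> R) (n : nat) (u v p : R).
Hypotheses (Hd : (1 <= d)%nat) (Hb : forall j, (j < d)%nat -> v <= Rv j <= u).
Hypotheses (Hv : 0 < v) (Hup : u <= p) (Hp : 1 / 2 <= p).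

Let E := Rpower 4 (p / v) * Rpower 2 (u / v) * Rpower (1 + 1 / (2 * v)) (u / (2 * v ^ 2))
  * Rpower (2 * exp 1 * p) (1 / (2 * v)).
Hypothesis HnE : E ^ d < INR n.

Let Y := Rpower (INR n) (2 * gR d Rv).
Let H := Rpower 2 (p + u) * Rpower (2 + 1 / (2 * v)) (u / (2 * v)).

Lemma smoothness_v_le_u : v <= u.
Proof. destruct (Hb 0%nat ltac:(lia)); lra. Qed.

Lemma smoothness_pos j : (j < d)%nat -> 0 < Rv j.
Proof. intros Hj. destruct (Hb j Hj). lra. Qed.

Lemma inv_sum_pos : 0 < inv_sum d Rv.
Proof.
  pose proof smoothness_v_le_u. destruct (inv_sum_bounds d Rv u v Hv Hb) as [Hs _].
  assert (0 < INR d / u) by (apply Rdiv_lt_0_compat; [apply (lt_INR 0)|]; lia || lra). lra.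
Qed.

Lemma Econst_ge1 : 1 <= E.
Proof.
  pose proof smoothness_v_le_u. pose proof exp_1_ge_2.
  assert (0 < 1 / (2 * v)) by (apply Rdiv_lt_0_compat; lra).
  assert (Hmul : forall x y, 1 <= x -> 1 <= y -> 1 <= x * y) by (intros; nra).
  unfold E. repeat apply Hmul; apply Rpower_ge1; try (apply Rdiv_le_0_compat); nra.
Qed.

Lemma Rpower_Econst_2v : Rpower E (2 * v)
  = Rpower 4 (2 * p) * Rpower 2 (2 * u) * Rpower (1 + 1 / (2 * v)) (u / v) * (2 * exp 1 * p).
Proof.
  pose proof exp_1_ge_2. assert (0 < 1 / (2 * v)) by (apply Rdiv_lt_0_compat; lra).
  unfold E. rewrite <- !Rpower_mult_distr by (repeat apply Rmult_lt_0_compat; try apply Rpower_pos; nra).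
  rewrite !Rpower_mult. replace (1 / (2 * v) * (2 * v)) with 1 by (field; lra).
  rewrite !Rpower_1 by (apply exp_pos || lra).
  replace (p / v * (2 * v)) with (2 * p) by (field; lra).
  replace (u / v * (2 * v)) with (2 * u) by (field; lra).
  replace (u / (2 * v ^ 2) * (2 * v)) with (u / v) by (field; lra). ring.
Qed.

Lemma Rpower_n_2g_ge : Rpower 4 (2 * p) * Rpower 2 (2 * u) * exp 1 <= Y.
Proof.
  pose proof exp_1_ge_2. pose proof Econst_ge1. pose proof inv_sum_pos.
  assert (Hdg : v <= INR d * gR d Rv).
  { destruct (inv_sum_bounds d Rv u v Hv Hb) as [_ Hs]. rewrite gR_inv_sum.
    apply Rmult_le_reg_r with (inv_sum d Rv); auto. unfold Rdiv in Hs.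
    replace (INR d * / inv_sum d Rv * inv_sum d Rv) with (INR d) by (field; lra).
    apply Rmult_le_reg_l with (/ v); [apply Rinv_0_lt_compat; auto|].
    replace (/ v * (v * inv_sum d Rv)) with (inv_sum d Rv) by (field; lra). lra. }
  assert (HEY : Rpower E (2 * v) <= Y).
  { apply Rle_trans with (Rpower E (INR d * (2 * gR d Rv))); [apply Rle_Rpower; lra|].
    rewrite <- Rpower_mult, Rpower_pow by lra. left. apply Rlt_Rpower_l.
    - rewrite gR_inv_sum. apply Rmult_lt_0_compat; [lra|apply Rinv_0_lt_compat; auto].
    - split; [apply pow_lt; lra|auto]. }
  rewrite Rpower_Econst_2v in HEY.
  assert (1 <= Rpower (1 + 1 / (2 * v)) (u / v)).
  { pose proof smoothness_v_le_u. apply Rpower_ge1; [assert (0 < 1 / (2 * v)) by (apply Rdiv_lt_0_compat; lra); lra|].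
    apply Rdiv_le_0_compat; lra. }
  assert (0 < Rpower 4 (2 * p) * Rpower 2 (2 * u)) by (apply Rmult_lt_0_compat; apply Rpower_pos).
  assert (exp 1 <= 2 * exp 1 * p) by nra.
  apply Rle_trans with (Rpower 4 (2 * p) * Rpower 2 (2 * u) * Rpower (1 + 1 / (2 * v)) (u / v) * (2 * exp 1 * p));
    [|auto].
  assert (Rpower 4 (2 * p) * Rpower 2 (2 * u) <= Rpower 4 (2 * p) * Rpower 2 (2 * u) * Rpower (1 + 1 / (2 * v)) (u / v)) by nra.
  apply Rmult_le_compat; nra.
Qed.

Lemma n_ge1 : (1 <= n)%nat.
Proof.
  pose proof Econst_ge1. pose proof (pow_R1_Rle E d H0). destruct n; [simpl in HnE; lra|lia].
Qed.

Lemma low_weight_frequencies lam T : 0 < lam -> 0 < T -> lam * T = INR d / (2 * u) ->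
  / lam * H ^ 2 = Y / exp 1 ->
  exists F : list (Zd d), NoDup F /\ (length F < n)%nat /\ forall k, sob_weight d Rv k < T -> In k F.
Proof.
  intros Hlam HT HlT HQ. pose proof smoothness_v_le_u. pose proof (exp_pos 1).
  assert (HY : 0 < Y) by apply Rpower_pos.
  destruct (exists_nat_bound_Rpower d Rv T v HT Hv (fun j Hj => proj1 (Hb j Hj))) as [B HB].
  destruct (low_weight_count d Rv T lam B HT Hlam smoothness_pos HB) as [F [HF [Hcnt Hcov]]].
  exists F. split; [auto|split; [|auto]]. apply INR_lt.
  set (rs := map Rv (seq 0 d)) in *.
  assert (Hrs : forall r, In r rs -> v <= r <= u).
  { intros r Hr. apply in_map_iff in Hr. destruct Hr as [j [<- Hj]]. apply in_seq in Hj. apply Hb. lia. }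
  assert (HQb : Rpower 4 (2 * p) * Rpower 2 (2 * u) <= / lam * H ^ 2).
  { rewrite HQ. apply Rmult_le_reg_r with (exp 1); auto.
    replace (Y / exp 1 * exp 1) with Y by (field; lra). apply Rpower_n_2g_ge. }
  assert (Htheta : forall r, In r rs -> 0 <= exp (1 / (2 * u)) * theta lam r B <= Rpower Y (/ (2 * r))).
  { intros r Hr. destruct (Hrs r Hr). split.
    - unfold theta. pose proof (exp_pos (1 / (2 * u))).
      pose proof (rsum_nonneg (fun m => exp (- lam * Rpower (INR m) (2 * r))) (seq 1 B)
        (fun m _ => Rlt_le _ _ (exp_pos _))). nra.
    - replace Y with (/ lam * H ^ 2 * exp 1) by (rewrite HQ; field; lra).
      apply (coord_factor_le r u v p lam H B); auto; reflexivity. }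
  assert (Hn : rprod (fun r => exp (1 / (2 * u)) * theta lam r B) rs <= INR n).
  { eapply Rle_trans; [apply rprod_le, Htheta|]. unfold rs, Y. rewrite <- INR_eq_rprod; auto.
    - lra.
    - apply smoothness_pos.
    - apply inv_sum_pos.
    - apply n_ge1. }
  rewrite rprod_scal in Hn. unfold rs in Hn at 1. rewrite length_map, length_seq in Hn.
  eapply Rle_lt_trans; [apply Hcnt|]. eapply Rlt_le_trans; [|apply Hn].
  apply Rmult_lt_compat_r; [apply rprod_pos; intros r _; unfold theta;
    pose proof (rsum_nonneg (fun m => exp (- lam * Rpower (INR m) (2 * r))) (seq 1 B)
      (fun m _ => Rlt_le _ _ (exp_pos _))); lra|].
  rewrite <- exp_mult_INR. apply exp_increasing.
  replace (INR d * (1 / (2 * u))) with (lam * T) by (rewrite HlT; field; lra). lra.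
Qed.

(** The threshold [T] and Rankin parameter [lam] are chosen so that [T^(-1/2)] is the claimed bound
    and [lam T = d/(2u)]. *)
Lemma approx_number_upper a : is_approx_number d Rv n a ->
  Rpower (INR n) (gR d Rv) * a
    <= Rpower 2 (p + u) * Rpower (1 + (2 * v + 1) / (2 * v)) (u / (2 * v)) * sqrt (2 * exp 1 * u / INR d).
Proof.
  intros [Ha _]. pose proof smoothness_v_le_u. pose proof (exp_pos 1).
  assert (Hdr : 1 <= INR d) by (apply (le_INR 1); auto).
  replace (1 + (2 * v + 1) / (2 * v)) with (2 + 1 / (2 * v)) by (field; lra). fold H.
  set (c := 2 * exp 1 * u / INR d).
  assert (Hc : 0 < c) by (apply Rdiv_lt_0_compat; nra).
  assert (HH : 0 < H) by (apply Rmult_lt_0_compat; apply Rpower_pos).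
  set (hi := H * sqrt c).
  assert (Hhi : 0 < hi) by (apply Rmult_lt_0_compat; [|apply sqrt_lt_R0]; auto).
  set (ng := Rpower (INR n) (gR d Rv)).
  assert (Hng : 0 < ng) by apply Rpower_pos.
  set (T := (ng / hi) ^ 2).
  assert (HT : 0 < T) by (apply pow_lt, Rdiv_lt_0_compat; auto).
  set (lam := INR d / (2 * u * T)).
  assert (Hlam : 0 < lam) by (apply Rdiv_lt_0_compat; [lra|apply Rmult_lt_0_compat; lra]).
  assert (HTY : T * hi ^ 2 = Y) by (unfold T, Y; rewrite <- Rpower_INR_gR_sq; fold ng; field; lra).
  assert (HQ : / lam * H ^ 2 = Y / exp 1).
  { rewrite <- HTY. unfold hi, lam. rewrite Rpow_mult_distr, pow2_sqrt by lra. unfold c. field. repeat split; lra. }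
  destruct (low_weight_frequencies lam T Hlam HT ltac:(unfold lam; field; split; lra) HQ) as [F [HF [Hlen Hcov]]].
  pose proof (Ha _ (truncation_approx d Rv F n T HT HF Hlen Hcov)) as HaT.
  assert (HsT : sqrt T = ng / hi) by (apply sqrt_pow2; left; apply Rdiv_lt_0_compat; auto).
  rewrite HsT in HaT. apply Rmult_le_reg_l with (/ ng); [apply Rinv_0_lt_compat; auto|].
  replace (/ ng * (ng * a)) with a by (field; lra). eapply Rle_trans; [apply HaT|]. right. field. lra.
Qed.

End UpperBound.

Theorem lemma3p5 (d : nat) (Rv : nat -> R) :
  (1 <= d)%nat ->
  (forall j, (j < d)%nat -> 0 < Rv j) ->
  forall n : nat, Econst d Rv ^ d < INR n ->
  forall a : R, is_approx_number d Rv n a ->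
  let u := Rmaxd d Rv in let v := Rmind d Rv in let p := Rmax (1/2) u in
  Rpower 2 (v - p) * sqrt (1 / (exp 1 * (INR d + 2 * u)))
    <= Rpower (INR n) (gR d Rv) * a
  /\ Rpower (INR n) (gR d Rv) * a
    <= Rpower 2 (p + u) * Rpower (1 + (2 * v + 1) / (2 * v)) (u / (2 * v))
       * sqrt (2 * exp 1 * u / INR d).
Proof.
  intros Hd Hpos n HnE a Ha u v p.
  assert (Hb : forall j, (j < d)%nat -> v <= Rv j <= u) by (split; [apply Rmind_le|apply Rmaxd_ge]; auto).
  assert (Hv : 0 < v) by (apply Rmind_pos; auto).
  assert (Hup : u <= p) by apply Rmax_r.
  assert (Hp : 1 / 2 <= p) by apply Rmax_l.
  assert (Hvu : v <= u) by (destruct (Hb 0%nat ltac:(lia)); lra).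
  split.
  - apply (approx_number_lower d Rv n a u v p); auto; [lra|].
    apply (n_ge1 d Rv n u v p Hd Hb Hv Hp HnE).
  - apply (approx_number_upper d Rv n u v p Hd Hb Hv Hup Hp HnE a Ha).
Qed.
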